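(* The correctly rounded versions $\mathrm{rnd}(\rho)$ of each of the activation functions $\rho=\mathrm{ReLU}$, $\mathrm{LeakyReLU}$, $\mathrm{GELU}$, $\mathrm{ELU}$, $\mathrm{Mish}$, $\mathrm{softplus}$, $\mathrm{sigmoid}$, and $\tanh$ satisfy Condition 1.
   Context: Floating point. Fix integers $E\ge 5$ and $M$ with $2^{E-1}\ge M\ge 3$; let $\mathfrak e_{\min}=-2^{E-1}+2$, $\mathfrak e_{\max}=2^{E-1}-1$. $\mathbb F=\{(-1)^b(s_0.s_1\dots s_M)_2\cdot 2^e: b,s_i\in\{0,1\},e\in\{\mathfrak e_{\min},\dots,\mathfrak e_{\max}\}\}$, $\overline{\mathbb F}=\mathbb F\cup\{-\infty,+\infty,\mathrm{NaN}\}$, $\Omega=2^{\mathfrak e_{\max}}(2-2^{-M})$, $\varepsilon=2^{-M-1}$. For $x\in\mathbb F$, $x^+=\min\{y\in\overline{\mathbb F}\setminus\{\mathrm{NaN}\}:y>x\}$. The rounding $\mathrm{rnd}:\mathbb R\cup\{\pm\infty\}\to\overline{\mathbb F}$: $\mathrm{rnd}(x)=-\infty$ if $x\le-\Omega-c$, $+\infty$ if $x\ge\Omega+c$ ($c=2^{\mathfrak e_{\max}}\varepsilon$), otherwise the nearest element of $\mathbb F$ with ties toward the float whose last significand bit is $0$. For $\rho:\mathbb R\to\mathbb R$, $\mathrm{rnd}(\rho)(x)=\mathrm{rnd}(\rho(x))$ for $x\in\mathbb F$, $\mathrm{rnd}(\lim_{t\to x}\rho(t))$ for $x=\pm\infty$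 when the limit exists in $\mathbb R\cup\{\pm\infty\}$, and $\mathrm{NaN}$ otherwise. The activations are the standard ones: $\mathrm{ReLU}(x)=\max\{x,0\}$; $\mathrm{LeakyReLU}(x)=\max\{x,ax\}$ with a fixed slope $a\in(0,1)$; $\mathrm{GELU}(x)=x\Phi(x)$ ($\Phi$ the standard normal CDF); $\mathrm{ELU}(x)=x$ for $x>0$ and $e^x-1$ otherwise; $\mathrm{softplus}(x)=\log(1+e^x)$; $\mathrm{Mish}(x)=x\tanh(\mathrm{softplus}(x))$; $\mathrm{sigmoid}(x)=1/(1+e^{-x})$; $\tanh$. Condition 1 on $\sigma:\overline{\mathbb F}\to\overline{\mathbb F}$: (C1) there exist $c_1,c_2\in\mathbb F$ with $\sigma(c_1)=0$, $|\sigma(c_2)|\in[\frac\varepsilon2+2\varepsilon^2,\frac54-2\varepsilon]$, $\max\{|c_1|,|c_2|\}\ge2^{\mathfrak e_{\min}+1}$, and $\sigma(x)$ between $\sigma(c_1)$ and $\sigma(c_2)$ for all $x$ between $c_1,c_2$; (C2) there is $\eta\in\mathbb F$ with $|\eta|\in[2^{\mathfrak e_{\min}+5},4-8\varepsilon]$ and $|\sigma(\eta)|,|\sigma(\eta^+)|\in[2^{\mathfrak e_{\min}+5},2^{\mathfrak e_{\max}-6}|\eta|]$ such that for all $x,y\in\mathbb F$ with $x\le\eta<\eta^+\le y$, either $\sigma(x)\le\sigma(\eta)<\sigma(\eta^+)\le\sigma(y)$ or $\sigma(x)\ge\sigma(\eta)>\sigma(\eta^+)\ge\sigma(y)$; (C3)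 there is $\lambda\in[0,2^{\mathfrak e_{\max}-7}\min\{|\sigma(\eta)|,2^{M+3}\}]$ with $|\sigma(x)-\sigma(\eta)|\le\lambda|x-\eta|$ and $|\sigma(y)-\sigma(\eta^+)|\le\lambda|y-\eta^+|$ for all $x,y\in\mathbb F$ with $x\le\eta<\eta^+\le y$. *)

From Stdlib Require Import Reals Lra ZArith ClassicalEpsilon.
From Coquelicot Require Import Coquelicot.
Open Scope R_scope.

Definition emin (E : nat) : Z := (- 2 ^ (Z.of_nat E - 1) + 2)%Z.
Definition emax (E : nat) : Z := (2 ^ (Z.of_nat E - 1) - 1)%Z.

(* (-1)^b (s0.s1...sM)_2 2^e  =  (-1)^b * m * 2^(e-M)  with m = (s0 s1 ... sM)_2 *)
Definition inF (E M : nat) (x : R) : Prop :=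
  exists (b : bool) (m e : Z),
    (0 <= m < 2 ^ (Z.of_nat M + 1))%Z /\ (emin E <= e <= emax E)%Z /\
    x = (if b then -1 else 1) * IZR m * powerRZ 2 (e - Z.of_nat M).

Definition Omega (E M : nat) : R :=
  powerRZ 2 (emax E) * (2 - powerRZ 2 (- Z.of_nat M)).
Definition eps (M : nat) : R := powerRZ 2 (- Z.of_nat M - 1).

(* Extended floats:  F-bar = F u {-oo,+oo,NaN}.  FNum r is meant for r in F. *)
Inductive Fbar : Type := FNum (r : R) | FPinf | FNinf | FNaN.

Definition inFbar (E M : nat) (z : Fbar) : Prop :=
  match z with FNum r => inF E M r | FPinf | FNinf => True | FNaN => False end.

Definition fle (a b : Fbar) : Prop :=
  match a, b with
  | FNaN, _ | _, FNaN => False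
  | FNinf, _ => True
  | _, FPinf => True
  | FNum x, FNum y => x <= y
  | _, _ => False
  end.
Definition flt (a b : Fbar) : Prop := fle a b /\ a <> b.

Definition fsucc_spec (E M : nat) (x : R) (z : Fbar) : Prop :=
  inFbar E M z /\ flt (FNum x) z /\
  forall w, inFbar E M w -> flt (FNum x) w -> fle z w.
Definition fsucc (E M : nat) (x : R) : Fbar :=
  epsilon (inhabits FNaN) (fsucc_spec E M x).

(* canonical representation (normal: s0 = 1, or subnormal: e = emin);
   "last significand bit is 0" refers to it *)
Definition last_bit_zero (E M : nat) (x : R) : Prop :=
  exists (b : bool) (m e : Z),
    (((2 ^ Z.of_nat M <= m < 2 ^ (Z.of_nat M + 1))%Z /\ (emin E <= e <= emax E)%Z)
     \/ ((0 <= m < 2 ^ Z.of_nat M)%Z /\ e = emin E)) /\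
    x = (if b then -1 else 1) * IZR m * powerRZ 2 (e - Z.of_nat M) /\
    Z.even m = true.

Definition round_spec (E M : nat) (x y : R) : Prop :=
  inF E M y /\ (forall z, inF E M z -> Rabs (x - y) <= Rabs (x - z)) /\
  (forall z, inF E M z -> Rabs (x - z) = Rabs (x - y) -> z <> y -> last_bit_zero E M y).

Definition rnd (E M : nat) (x : Rbar) : Fbar :=
  let c := powerRZ 2 (emax E) * eps M in
  match x with
  | p_infty => FPinf
  | m_infty => FNinf
  | Finite r =>
      if Rle_dec r (- Omega E M - c) then FNinf
      else if Rle_dec (Omega E M + c) r then FPinf
      else FNum (epsilon (inhabits 0) (round_spec E M r))
  end.

Definition rndf (E M : nat) (rho : R -> R) (x : Fbar) : Fbar :=
  match x with
  | FNum r => rnd E M (Finite (rho r))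
  | FPinf => if excluded_middle_informative (ex_lim rho p_infty)
             then rnd E M (Lim rho p_infty) else FNaN
  | FNinf => if excluded_middle_informative (ex_lim rho m_infty)
             then rnd E M (Lim rho m_infty) else FNaN
  | FNaN => FNaN
  end.

Definition ReLU (x : R) : R := Rmax x 0.
Definition LeakyReLU (a x : R) : R := Rmax x (a * x).
Definition Phi (x : R) : R :=
  / 2 + RInt (fun t => exp (- t ^ 2 / 2)) 0 x / sqrt (2 * PI).
Definition GELU (x : R) : R := x * Phi x.
Definition ELU (x : R) : R := if Rlt_dec 0 x then x else exp x - 1.
Definition softplus (x : R) : R := ln (1 + exp x).
Definition Mish (x : R) : R := x * tanh (softplus x).
Definition sigmoid (x : R) : R := / (1 + exp (- x)).
Definition tanh_act (x : R) : R := tanh x.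

Definition C1 (E M : nat) (sigma : Fbar -> Fbar) : Prop :=
  exists c1 c2 v, inF E M c1 /\ inF E M c2 /\
    sigma (FNum c1) = FNum 0 /\ sigma (FNum c2) = FNum v /\
    eps M / 2 + 2 * eps M ^ 2 <= Rabs v <= 5 / 4 - 2 * eps M /\
    Rmax (Rabs c1) (Rabs c2) >= powerRZ 2 (emin E + 1) /\
    forall x, inF E M x -> Rmin c1 c2 <= x <= Rmax c1 c2 ->
      exists u, sigma (FNum x) = FNum u /\ Rmin 0 v <= u <= Rmax 0 v.

Definition realF (z : Fbar) : R := match z with FNum r => r | _ => 0 end.

Definition Condition1 (E M : nat) (sigma : Fbar -> Fbar) : Prop :=
  C1 E M sigma /\
  exists eta s0 s1,
    let etap := fsucc E M eta in
    let lo := powerRZ 2 (emin E + 5) in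
    inF E M eta /\ lo <= Rabs eta <= 4 - 8 * eps M /\
    sigma (FNum eta) = FNum s0 /\ sigma etap = FNum s1 /\
    lo <= Rabs s0 <= powerRZ 2 (emax E - 6) * Rabs eta /\
    lo <= Rabs s1 <= powerRZ 2 (emax E - 6) * Rabs eta /\
    (forall x y, inF E M x -> inF E M y -> x <= eta -> fle etap (FNum y) ->
       (fle (sigma (FNum x)) (FNum s0) /\ s0 < s1 /\ fle (FNum s1) (sigma (FNum y))) \/
       (fle (FNum s0) (sigma (FNum x)) /\ s0 > s1 /\ fle (sigma (FNum y)) (FNum s1))) /\
    exists lam,
      0 <= lam <= powerRZ 2 (emax E - 7) * Rmin (Rabs s0) (powerRZ 2 (Z.of_nat M + 3)) /\
      forall x y, inF E M x -> inF E M y -> x <= eta -> fle etap (FNum y) ->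
        (exists u, sigma (FNum x) = FNum u /\ Rabs (u - s0) <= lam * Rabs (x - eta)) /\
        (exists w, sigma (FNum y) = FNum w /\ Rabs (w - s1) <= lam * Rabs (y - realF etap)).

From Pilot Require Import Defs.
From Stdlib Require Import Reals Lra Lia ZArith ClassicalEpsilon Classical List.
From Coquelicot Require Import Coquelicot.
Open Scope R_scope.

(* For every activation [sigma], [rnd(sigma)] agrees on finite floats with [fl \o sigma], where
   [fl] rounds to nearest; [fl] exists because the format is finite and, of two adjacent floats,
   one has an even last bit.  Since [fl] is monotone, (C1) and the order part of (C2) follow from
   monotonicity of [sigma] near suitable points: [c1 = 0] (or [c1 = -2 ^ emax], where sigmoid and
   softplus underflow to [0]), and [eta = 1] (ReLU, LeakyReLU, ELU, GELU, Mish), [eta = 1/2] (tanh)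
   or [eta = -3] (sigmoid, softplus), with [eta^+ = eta + ulp eta].  The strict step
   [fl (sigma eta) < fl (sigma eta^+)] comes from a lower bound on the increment of [sigma] over one
   ulp, measured at the finer scale of [sigma eta].  For (C3), [sigma] is Lipschitz, and the two
   rounding errors are absorbed because distinct floats near [eta] are at least one ulp apart.
   GELU needs [Phi <= 1], i.e. [(RInt gauss 0 x) ^ 2 <= PI / 2], which follows from the identity
   [(RInt gauss 0 x) ^ 2 + 2 * RInt (fun s => exp (- x ^ 2 (1 + s ^ 2) / 2) / (1 + s ^ 2)) 0 1 = PI / 2]. *)

(** * Elementary bounds on the activations *)

Lemma exp_le_compat a b : a <= b -> exp a <= exp b.
Proof. intros [H|<-]; [left; apply exp_increasing; exact H|right; reflexivity]. Qed.

Lemma exp_le_inv_1_sub x : x < 1 -> exp x <= / (1 - x).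
Proof.
  intros Hx. rewrite <- (Rinv_inv (exp x)), <- exp_Ropp.
  pose proof (exp_ineq1_le (- x)). apply Rinv_le_contravar; lra.
Qed.

Lemma exp_mult_INR n x : exp (INR n * x) = exp x ^ n.
Proof.
  induction n as [|n IH]; [simpl; rewrite Rmult_0_l, exp_0; reflexivity|].
  rewrite S_INR, Rmult_plus_distr_r, Rmult_1_l, exp_plus, IH. simpl. ring.
Qed.

Lemma exp_1_bounds : 2.63 <= exp 1 <= 2.75.
Proof.
  split.
  - replace 1 with (INR 16 * (1/16)) by (simpl; lra). rewrite exp_mult_INR.
    assert (H : (17/16) ^ 16 <= exp (1/16) ^ 16).
    { apply pow_incr. pose proof (exp_ineq1_le (1/16)). lra. }
    simpl in *. lra.
  - replace 1 with (INR 64 * (1/64)) by (simpl; lra). rewrite exp_mult_INR.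
    assert (H : exp (1/64) ^ 64 <= (64/63) ^ 64).
    { apply pow_incr. split; [left; apply exp_pos|].
      replace (64/63) with (/ (1 - 1/64)) by field. apply exp_le_inv_1_sub. lra. }
    simpl in *. lra.
Qed.

Lemma exp_3_bounds : 18 <= exp 3 <= 21.
Proof.
  replace 3 with (INR 3 * 1) by (simpl; lra). rewrite exp_mult_INR.
  pose proof exp_1_bounds. simpl. split; nra.
Qed.

Lemma ln_le_sub_1 z : 0 < z -> ln z <= z - 1.
Proof. intros Hz. pose proof (exp_ineq1_le (ln z)) as He. rewrite exp_ln in He by exact Hz. lra. Qed.

Lemma ln_ge_1_sub_inv z : 0 < z -> 1 - / z <= ln z.
Proof.
  intros Hz. pose proof (ln_le_sub_1 (/ z) (Rinv_0_lt_compat z Hz)) as Hl.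
  rewrite ln_Rinv in Hl by exact Hz. lra.
Qed.

Lemma div_1_add_le_1_sub_exp t : 0 <= t -> t / (1 + t) <= 1 - exp (- t).
Proof.
  intros Ht. pose proof (exp_le_inv_1_sub (- t) ltac:(lra)) as He.
  replace (1 - - t) with (1 + t) in He by ring.
  replace (t / (1 + t)) with (1 - / (1 + t)) by (field; lra). lra.
Qed.

Lemma Rabs_sub_le_of_increments (f : R -> R) (L : R) :
  (forall a b, a <= b -> f a <= f b) -> (forall a b, a <= b -> f b - f a <= L * (b - a)) ->
  forall a b, Rabs (f a - f b) <= L * Rabs (a - b).
Proof.
  intros Hmono Hinc a b. destruct (Rle_dec a b) as [Hab|Hab].
  - rewrite (Rabs_left1 (a - b)), (Rabs_left1 (f a - f b)) by (try apply Rle_minus, Hmono; lra).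
    specialize (Hinc a b Hab). lra.
  - rewrite (Rabs_right (a - b)), (Rabs_right (f a - f b))
      by (apply Rge_minus, Rle_ge; try apply Hmono; lra).
    specialize (Hinc b a ltac:(lra)). lra.
Qed.

Lemma sigmoid_pos x : 0 < sigmoid x.
Proof. unfold sigmoid. pose proof (exp_pos (- x)). apply Rinv_0_lt_compat. lra. Qed.

Lemma sigmoid_lt_1 x : sigmoid x < 1.
Proof.
  unfold sigmoid. pose proof (exp_pos (- x)). rewrite <- Rinv_1. apply Rinv_lt_contravar; lra.
Qed.

Lemma sigmoid_le_compat a b : a <= b -> sigmoid a <= sigmoid b.
Proof.
  intros Hab. unfold sigmoid. pose proof (exp_pos (- b)).
  pose proof (exp_le_compat (- b) (- a) ltac:(lra)). apply Rinv_le_contravar; lra.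
Qed.

Lemma sigmoid_0 : sigmoid 0 = 1 / 2.
Proof. unfold sigmoid. rewrite Ropp_0, exp_0. field. Qed.

Lemma sigmoid_le_exp x : sigmoid x <= exp x.
Proof.
  pose proof (exp_pos x).
  replace (sigmoid x) with (exp x * / (1 + exp x)) by (unfold sigmoid; rewrite exp_Ropp; field; lra).
  rewrite <- (Rmult_1_r (exp x)) at 3. apply Rmult_le_compat_l; [lra|].
  rewrite <- Rinv_1. apply Rinv_le_contravar; lra.
Qed.

Lemma sigmoid_increment a b : sigmoid b - sigmoid a =
  exp (- a) * (1 - exp (a - b)) / ((1 + exp (- a)) * (1 + exp (- a) * exp (a - b))).
Proof.
  assert (Hqr : exp (- a) * exp (a - b) = exp (- b)) by (rewrite <- exp_plus; f_equal; ring).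
  replace (exp (- a) * (1 - exp (a - b))) with (exp (- a) - exp (- b)) by (rewrite <- Hqr; ring).
  rewrite Hqr. unfold sigmoid. pose proof (exp_pos (- a)). pose proof (exp_pos (- b)). field. lra.
Qed.

Lemma sigmoid_lipschitz a b : Rabs (sigmoid a - sigmoid b) <= Rabs (a - b).
Proof.
  rewrite <- (Rmult_1_l (Rabs (a - b))).
  apply Rabs_sub_le_of_increments; [exact sigmoid_le_compat|]. intros u v Huv.
  rewrite sigmoid_increment. pose proof (exp_pos (- u)) as Hq. pose proof (exp_pos (u - v)) as Hr.
  pose proof (exp_ineq1_le (u - v)).
  set (q := exp (- u)) in *. set (r := exp (u - v)) in *.
  apply Rmult_le_reg_r with ((1 + q) * (1 + q * r)); [nra|].
  unfold Rdiv. rewrite Rmult_assoc, Rinv_l, Rmult_1_r by nra.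
  assert (q * (1 - r) <= q * (v - u)) by (apply Rmult_le_compat_l; lra).
  assert (0 <= (v - u) * ((1 + q) * (1 + q * r) - q)).
  { apply Rmult_le_pos; [lra|]. assert (0 <= q * r) by nra. nra. }
  nra.
Qed.

Lemma sigmoid_increment_ge x s : 0 <= s ->
  exp (- x) * (s / (1 + s)) / (1 + exp (- x)) ^ 2 <= sigmoid (x + s) - sigmoid x.
Proof.
  intros Hs. rewrite sigmoid_increment. replace (x - (x + s)) with (- s) by ring.
  pose proof (div_1_add_le_1_sub_exp s Hs). pose proof (exp_pos (- x)) as Hq.
  pose proof (exp_pos (- s)). pose proof (exp_le_compat (- s) 0 ltac:(lra)). rewrite exp_0 in *.
  assert (0 <= s / (1 + s)) by (apply Rdiv_le_0_compat; lra).
  set (q := exp (- x)) in *. set (r := exp (- s)) in *.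
  unfold Rdiv. apply Rmult_le_compat; try nra.
  - left. apply Rinv_0_lt_compat. nra.
  - apply Rinv_le_contravar; nra.
Qed.

Lemma sigmoid_m3_bounds : 1/32 <= sigmoid (-3) <= 15/256.
Proof.
  pose proof exp_3_bounds. unfold sigmoid. replace (- -3) with 3 by ring.
  split; [replace (1/32) with (/ 32) by field|replace (15/256) with (/ (256/15)) by field];
    apply Rinv_le_contravar; lra.
Qed.

Lemma sigmoid_increment_m3 s : 0 <= s <= 1/4 -> s / 40 <= sigmoid (-3 + s) - sigmoid (-3).
Proof.
  intros Hs. pose proof (sigmoid_increment_ge (-3) s ltac:(lra)) as H.
  replace (- -3) with 3 in H by ring. eapply Rle_trans; [|exact H].
  pose proof exp_3_bounds. set (A := exp 3) in *.
  assert (s * 4 / 5 <= s / (1 + s)).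
  { unfold Rdiv. rewrite Rmult_assoc. apply Rmult_le_compat_l; [lra|].
    replace (4 * / 5) with (/ (5/4)) by field. apply Rinv_le_contravar; lra. }
  apply Rmult_le_reg_r with ((1 + A) ^ 2); [nra|].
  unfold Rdiv at 2. rewrite Rmult_assoc, Rinv_l, Rmult_1_r by nra.
  assert (A * (s * 4 / 5) <= A * (s / (1 + s))) by (apply Rmult_le_compat_l; lra).
  assert (0 <= s * (32 * A - (1 + A) ^ 2)) by (apply Rmult_le_pos; nra).
  nra.
Qed.

Lemma softplus_pos x : 0 < softplus x.
Proof.
  unfold softplus. pose proof (exp_pos x). rewrite <- ln_1. apply ln_increasing; lra.
Qed.

Lemma softplus_le_compat a b : a <= b -> softplus a <= softplus b.
Proof.
  intros Hab. unfold softplus. pose proof (exp_pos a). pose proof (exp_le_compat a b Hab).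
  apply ln_le; lra.
Qed.

Lemma softplus_lipschitz a b : Rabs (softplus a - softplus b) <= Rabs (a - b).
Proof.
  rewrite <- (Rmult_1_l (Rabs (a - b))).
  apply Rabs_sub_le_of_increments; [exact softplus_le_compat|]. intros u v Huv.
  unfold softplus. pose proof (exp_pos u). pose proof (exp_pos (v - u)).
  pose proof (exp_le_compat 0 (v - u) ltac:(lra)). rewrite exp_0 in *.
  assert (Hv : exp v = exp u * exp (v - u)) by (rewrite <- exp_plus; f_equal; ring).
  assert (Hl : ln (1 + exp v) <= ln ((1 + exp u) * exp (v - u))) by (apply ln_le; nra).
  rewrite ln_mult, ln_exp in Hl by (try apply exp_pos; lra). lra.
Qed.

Lemma softplus_le_exp x : softplus x <= exp x.
Proof. unfold softplus. pose proof (exp_pos x). pose proof (ln_le_sub_1 (1 + exp x)). lra. Qed.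

Lemma softplus_le_add_exp_opp x : softplus x <= x + exp (- x).
Proof.
  unfold softplus. pose proof (exp_pos x). pose proof (exp_pos (- x)).
  replace (1 + exp x) with (exp x * (1 + exp (- x))) by (rewrite exp_Ropp; field; lra).
  rewrite ln_mult, ln_exp by lra. pose proof (ln_le_sub_1 (1 + exp (- x))). lra.
Qed.

Lemma softplus_0_bounds : 1/2 <= softplus 0 <= 1.
Proof.
  unfold softplus. rewrite exp_0. replace (1 + 1) with 2 by ring.
  pose proof ln_lt_2. pose proof (ln_le_sub_1 2). lra.
Qed.

Lemma softplus_1_le : softplus 1 <= 2.
Proof.
  unfold softplus. pose proof exp_1_bounds. rewrite <- (ln_exp 2).
  apply ln_le; [lra|]. replace 2 with (INR 2 * 1) by (simpl; lra). rewrite exp_mult_INR. simpl. nra.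
Qed.

Lemma softplus_m3_bounds : 1/32 <= softplus (-3) <= 15/256.
Proof.
  pose proof exp_3_bounds. unfold softplus. replace (-3) with (- (3)) by ring. rewrite exp_Ropp.
  assert (0 < / exp 3) by (apply Rinv_0_lt_compat; lra).
  pose proof (ln_ge_1_sub_inv (1 + / exp 3)) as Hlo. pose proof (ln_le_sub_1 (1 + / exp 3)).
  replace (1 - / (1 + / exp 3)) with (/ (exp 3 + 1)) in Hlo by (field; lra).
  assert (/ 32 <= / (exp 3 + 1)) by (apply Rinv_le_contravar; lra).
  assert (/ exp 3 <= / 18) by (apply Rinv_le_contravar; lra).
  lra.
Qed.

Lemma softplus_increment_m3 s : 0 <= s <= 1/4 -> s / 40 <= softplus (-3 + s) - softplus (-3).
Proof.
  intros Hs. pose proof exp_3_bounds. unfold softplus.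
  pose proof (exp_pos (-3)). pose proof (exp_pos (-3 + s)).
  rewrite <- ln_div by lra.
  pose proof (ln_ge_1_sub_inv ((1 + exp (-3 + s)) / (1 + exp (-3)))
    ltac:(apply Rdiv_lt_0_compat; lra)) as Hln.
  replace (1 - / ((1 + exp (-3 + s)) / (1 + exp (-3))))
    with ((exp (-3 + s) - exp (-3)) / (1 + exp (-3 + s))) in Hln by (field; lra).
  eapply Rle_trans; [|exact Hln].
  rewrite exp_plus in *. replace (-3) with (- (3)) in * by ring. rewrite exp_Ropp in *.
  pose proof (exp_ineq1_le s). pose proof (exp_le_inv_1_sub s ltac:(lra)).
  assert (/ (1 - s) <= 4/3) by (replace (4/3) with (/ (3/4)) by field; apply Rinv_le_contravar; lra).
  set (q := / exp 3) in *. set (r := exp s) in *.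
  assert (q <= / 18) by (apply Rinv_le_contravar; lra).
  assert (/ 21 <= q) by (apply Rinv_le_contravar; lra).
  apply Rmult_le_reg_r with (40 * (1 + q * r)); [nra|].
  unfold Rdiv. field_simplify; [|nra].
  assert (q * s <= q * (r - 1)) by (apply Rmult_le_compat_l; lra).
  assert (q * r <= q * (4/3)) by (apply Rmult_le_compat_l; lra). nra.
Qed.

Lemma tanh_eq_sigmoid x : tanh x = 2 * sigmoid (2 * x) - 1.
Proof.
  unfold tanh, sinh, cosh, sigmoid.
  assert (Hx : exp x = / exp (- x)) by (rewrite exp_Ropp, Rinv_inv; reflexivity).
  replace (- (2 * x)) with (- x + - x) by ring. rewrite exp_plus, Hx.
  pose proof (exp_pos (- x)). field. split; [nra|lra].
Qed.

Lemma tanh_bounds x : -1 < tanh x < 1.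
Proof.
  rewrite tanh_eq_sigmoid. pose proof (sigmoid_pos (2 * x)). pose proof (sigmoid_lt_1 (2 * x)). lra.
Qed.

Lemma tanh_le_compat a b : a <= b -> tanh a <= tanh b.
Proof.
  intros Hab. rewrite !tanh_eq_sigmoid. pose proof (sigmoid_le_compat (2 * a) (2 * b) ltac:(lra)). lra.
Qed.

Lemma tanh_lipschitz a b : Rabs (tanh a - tanh b) <= 4 * Rabs (a - b).
Proof.
  rewrite !tanh_eq_sigmoid. pose proof (sigmoid_lipschitz (2 * a) (2 * b)) as H.
  replace (2 * sigmoid (2 * a) - 1 - (2 * sigmoid (2 * b) - 1))
    with (2 * (sigmoid (2 * a) - sigmoid (2 * b))) by ring.
  replace (2 * a - 2 * b) with (2 * (a - b)) in H by ring.
  rewrite Rabs_mult, (Rabs_right 2) in * by lra. lra.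
Qed.

Lemma tanh_0 : tanh 0 = 0.
Proof. rewrite tanh_eq_sigmoid, Rmult_0_r, sigmoid_0. field. Qed.

Lemma tanh_nonneg x : 0 <= x -> 0 <= tanh x.
Proof. intros Hx. rewrite <- tanh_0. apply tanh_le_compat. exact Hx. Qed.

Lemma tanh_1_ge : 1/2 <= tanh 1.
Proof.
  rewrite tanh_eq_sigmoid. unfold sigmoid. pose proof exp_1_bounds.
  replace (- (2 * 1)) with (- (INR 2 * 1)) by (simpl; ring). rewrite exp_Ropp, exp_mult_INR.
  simpl. assert (/ (exp 1 * (exp 1 * 1)) <= / 3) by (apply Rinv_le_contravar; nra).
  assert (0 < / (exp 1 * (exp 1 * 1))) by (apply Rinv_0_lt_compat; nra).
  set (q := / (exp 1 * (exp 1 * 1))) in *.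
  assert (3/4 <= / (1 + q)) by (replace (3/4) with (/ (4/3)) by field; apply Rinv_le_contravar; lra).
  lra.
Qed.

Lemma tanh_half_bounds : 1/4 <= tanh (1/2) <= 15/32.
Proof.
  rewrite tanh_eq_sigmoid. unfold sigmoid. replace (- (2 * (1/2))) with (Ropp 1) by field.
  rewrite exp_Ropp. pose proof exp_1_bounds.
  replace (2 * / (1 + / exp 1) - 1) with (1 - 2 * / (exp 1 + 1)) by (field; lra).
  assert (/ 3.75 <= / (exp 1 + 1)) by (apply Rinv_le_contravar; lra).
  assert (/ (exp 1 + 1) <= / 3.63) by (apply Rinv_le_contravar; lra).
  lra.
Qed.

Lemma tanh_increment_half t : 0 <= t <= 1/16 -> 3 * t / 5 <= tanh (1/2 + t) - tanh (1/2).
Proof.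
  intros Ht. rewrite !tanh_eq_sigmoid.
  replace (2 * (1/2 + t)) with (1 + 2 * t) by field. replace (2 * (1/2)) with 1 by field.
  pose proof (sigmoid_increment_ge 1 (2 * t) ltac:(lra)) as H.
  rewrite exp_Ropp in H. pose proof exp_1_bounds. set (q := / exp 1) in *.
  assert (/ 2.75 <= q) by (apply Rinv_le_contravar; lra).
  assert (q <= / 2.63) by (apply Rinv_le_contravar; lra).
  assert (2 * t * (8/9) <= 2 * t / (1 + 2 * t)).
  { change (2 * t / (1 + 2 * t)) with (2 * t * / (1 + 2 * t)).
    apply Rmult_le_compat_l; [lra|].
    replace (8/9) with (/ (9/8)) by field. apply Rinv_le_contravar; lra. }
  assert (3 * t / 10 <= q * (2 * t / (1 + 2 * t)) / (1 + q) ^ 2).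
  { apply Rmult_le_reg_r with ((1 + q) ^ 2); [nra|].
    unfold Rdiv at 2. rewrite Rmult_assoc, Rinv_l, Rmult_1_r by nra.
    assert (q * (2 * t * (8/9)) <= q * (2 * t / (1 + 2 * t))) by (apply Rmult_le_compat_l; lra).
    assert (0 <= t * (160 * q - 27 * (1 + q) ^ 2)) by (apply Rmult_le_pos; nra).
    nra. }
  lra.
Qed.

Definition mish_gate (x : R) : R := tanh (softplus x).

Lemma mish_gate_bounds x : 0 <= mish_gate x <= 1.
Proof.
  unfold mish_gate. pose proof (tanh_nonneg (softplus x) (Rlt_le _ _ (softplus_pos x))).
  pose proof (tanh_bounds (softplus x)). lra.
Qed.

Lemma mish_gate_le_compat a b : a <= b -> mish_gate a <= mish_gate b.
Proof. intros Hab. apply tanh_le_compat, softplus_le_compat, Hab. Qed.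

Lemma mish_gate_lipschitz a b : Rabs (mish_gate a - mish_gate b) <= 4 * Rabs (a - b).
Proof.
  unfold mish_gate. pose proof (tanh_lipschitz (softplus a) (softplus b)).
  pose proof (softplus_lipschitz a b). lra.
Qed.

Lemma mish_gate_1_bounds : 1/2 < mish_gate 1 <= 15/16.
Proof.
  unfold mish_gate, softplus. rewrite tanh_eq_sigmoid. unfold sigmoid.
  pose proof exp_1_bounds. set (w := 1 + exp 1) in *.
  replace (- (2 * ln w)) with (- (ln w + ln w)) by ring.
  rewrite exp_Ropp, exp_plus, exp_ln by (unfold w; lra).
  assert (13 <= w * w <= 15) by (unfold w; nra).
  replace (2 * / (1 + / (w * w)) - 1) with (1 - 2 * / (w * w + 1)) by (field; nra).
  assert (/ 16 <= / (w * w + 1)) by (apply Rinv_le_contravar; lra).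
  assert (/ (w * w + 1) <= / 14) by (apply Rinv_le_contravar; lra).
  lra.
Qed.

(** * The Gaussian integral and [Phi] *)

Lemma continuous_of_ex_derive (f : R -> R) x : ex_derive f x -> continuous f x.
Proof. exact (@ex_derive_continuous R_AbsRing R_NormedModule f x). Qed.

Lemma ex_RInt_of_continuous (f : R -> R) a b : (forall z, continuous f z) -> ex_RInt f a b.
Proof. intros Hf. apply (@ex_RInt_continuous R_CompleteNormedModule). intros z _. apply Hf. Qed.

Definition gauss (t : R) : R := exp (- t ^ 2 / 2).

Lemma continuous_gauss x : continuous gauss x.
Proof. apply continuous_of_ex_derive. unfold gauss. auto_derive. exact I. Qed.

Lemma ex_RInt_gauss a b : ex_RInt gauss a b.
Proof. apply ex_RInt_of_continuous, continuous_gauss. Qed.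

Lemma gauss_bounds t : 0 < gauss t <= 1.
Proof.
  unfold gauss. split; [apply exp_pos|]. rewrite <- exp_0. apply exp_le_compat.
  assert (0 <= t ^ 2) by (simpl; nra). lra.
Qed.

Lemma RInt_gauss_bounds a b : a <= b -> 0 <= RInt gauss a b <= b - a.
Proof.
  intros Hab. split.
  - apply RInt_ge_0; [exact Hab|apply ex_RInt_gauss|]. intros x _. left. apply gauss_bounds.
  - replace (b - a) with (RInt (fun _ => 1) a b) by (rewrite RInt_const; compute; ring).
    apply RInt_le; [exact Hab|apply ex_RInt_gauss|apply ex_RInt_const|].
    intros x _. apply gauss_bounds.
Qed.

Lemma RInt_gauss_Chasles a b : RInt gauss 0 b - RInt gauss 0 a = RInt gauss a b.
Proof. rewrite <- (RInt_Chasles gauss 0 a b) by apply ex_RInt_gauss. compute. ring. Qed.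

Lemma is_derive_RInt_gauss x : is_derive (fun y => RInt gauss 0 y) x (gauss x).
Proof.
  apply (is_derive_RInt gauss _ 0 x); [|apply continuous_gauss].
  apply filter_forall. intros y. apply (RInt_correct gauss), ex_RInt_gauss.
Qed.

Definition gauss_kernel (x s : R) : R := exp (- (x ^ 2 * (1 + s ^ 2)) / 2) / (1 + s ^ 2).
Definition gauss_kernel_dx (x s : R) : R := - x * exp (- (x ^ 2 * (1 + s ^ 2)) / 2).
Definition gauss_aux (x : R) : R := RInt (gauss_kernel x) 0 1.

Lemma is_derive_gauss_kernel x s : is_derive (fun u => gauss_kernel u s) x (gauss_kernel_dx x s).
Proof.
  unfold gauss_kernel, gauss_kernel_dx. assert (0 <= s ^ 2) by (simpl; nra).
  auto_derive; [simpl in *; lra|]. simpl. unfold Rdiv. field. simpl in *. lra.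
Qed.

Lemma continuous_gauss_kernel x s : continuous (gauss_kernel x) s.
Proof.
  apply continuous_of_ex_derive. unfold gauss_kernel. auto_derive.
  assert (0 <= s ^ 2) by (simpl; nra). simpl in *. lra.
Qed.

Lemma continuity_2d_gauss_kernel_dx x s : continuity_2d_pt gauss_kernel_dx x s.
Proof.
  apply continuity_2d_pt_ext with (fun u v => (- u) * exp (u * u * (1 + v * v) * (- / 2))).
  { intros u v. unfold gauss_kernel_dx. do 2 f_equal. simpl. field. }
  apply continuity_2d_pt_mult; [apply continuity_2d_pt_opp, continuity_2d_pt_id1|].
  apply continuity_1d_2d_pt_comp with (f := exp).
  - apply continuity_pt_filterlim, continuous_exp.
  - repeat first [ apply continuity_2d_pt_mult | apply continuity_2d_pt_plus
                 | apply continuity_2d_pt_id1 | apply continuity_2d_pt_id2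
                 | apply continuity_2d_pt_const ].
Qed.

Lemma is_derive_gauss_aux x : is_derive gauss_aux x (RInt (gauss_kernel_dx x) 0 1).
Proof.
  assert (HD : forall u t, Derive (fun z => gauss_kernel z t) u = gauss_kernel_dx u t)
    by (intros; apply is_derive_unique, is_derive_gauss_kernel).
  rewrite <- (RInt_ext (fun t => Derive (fun u => gauss_kernel u t) x)) by (intros; apply HD).
  apply (is_derive_RInt_param gauss_kernel 0 1 x).
  - apply filter_forall. intros y t _. eexists. apply is_derive_gauss_kernel.
  - intros t _. apply continuity_2d_pt_ext with gauss_kernel_dx.
    + intros u v. symmetry. apply HD.
    + apply continuity_2d_gauss_kernel_dx.
  - apply filter_forall. intros y. apply ex_RInt_of_continuous, continuous_gauss_kernel.
Qed.

(* Substituting [t = x s] in [RInt gauss 0 x]. *)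
Lemma RInt_gauss_kernel_dx x : RInt (gauss_kernel_dx x) 0 1 = - gauss x * RInt gauss 0 x.
Proof.
  apply is_RInt_unique.
  assert (H : is_RInt gauss (x * 0 + 0) (x * 1 + 0) (RInt gauss 0 x)).
  { replace (x * 0 + 0) with 0 by ring. replace (x * 1 + 0) with x by ring.
    apply (RInt_correct gauss), ex_RInt_gauss. }
  apply (is_RInt_comp_lin gauss x 0 0 1), (is_RInt_scal _ 0 1 (- gauss x)) in H.
  apply (is_RInt_ext _ _ 0 1) with (2 := H). intros s _.
  unfold gauss_kernel_dx, gauss, scal; simpl; unfold mult; simpl.
  replace (- (x * (x * 1) * (1 + s * (s * 1))) / 2)
    with (- (x * (x * 1)) / 2 + - ((x * s + 0) * ((x * s + 0) * 1)) / 2) by field.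
  rewrite exp_plus. ring.
Qed.

Lemma gauss_aux_0 : gauss_aux 0 = PI / 4.
Proof.
  apply is_RInt_unique.
  replace (PI / 4) with (minus (atan 1) (atan 0))
    by (rewrite atan_1, atan_0; unfold minus, plus, opp; simpl; ring).
  apply (is_RInt_ext (fun s => / (1 + s²))).
  - intros s _. unfold gauss_kernel, Rsqr. simpl.
    replace (- (0 * (0 * 1) * (1 + s * (s * 1))) / 2) with 0 by field.
    rewrite exp_0. field. nra.
  - apply (is_RInt_derive atan); [intros; apply is_derive_atan|].
    intros s _. apply continuous_of_ex_derive. auto_derive. unfold Rsqr. nra.
Qed.

(* The left-hand side has derivative [0] by [RInt_gauss_kernel_dx]; at [x = 0] it is [2 * atan 1]. *)
Lemma gauss_integral_identity x : (RInt gauss 0 x) ^ 2 + 2 * gauss_aux x = PI / 2.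
Proof.
  set (H := fun y => (RInt gauss 0 y) ^ 2 + 2 * gauss_aux y).
  assert (HD : forall y, is_derive H y 0).
  { intros y.
    pose proof (is_derive_pow _ 2 y _ (is_derive_RInt_gauss y)) as H1.
    pose proof (is_derive_scal _ y 2 _ (is_derive_gauss_aux y)) as H2.
    pose proof (@is_derive_plus R_AbsRing R_NormedModule _ _ y _ _ H1 H2) as Hd.
    rewrite RInt_gauss_kernel_dx in Hd.
    match type of Hd with is_derive _ _ ?D =>
      replace D with 0 in Hd by (unfold plus; simpl; ring) end.
    exact Hd. }
  destruct (MVT_gen H 0 x (fun _ => 0)) as [c [_ Hc]].
  - intros y _. apply HD.
  - intros y _. apply continuity_pt_filterlim, continuous_of_ex_derive. eexists. apply HD.
  - change (H x = PI / 2). replace (H x) with (H 0) by lra. unfold H.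
    rewrite RInt_point, gauss_aux_0. unfold zero; simpl. field.
Qed.

Lemma gauss_aux_nonneg x : 0 <= gauss_aux x.
Proof.
  apply RInt_ge_0; [lra|apply ex_RInt_of_continuous, continuous_gauss_kernel|].
  intros s _. unfold gauss_kernel. assert (0 <= s ^ 2) by (simpl; nra).
  apply Rdiv_le_0_compat; [left; apply exp_pos|lra].
Qed.

Lemma sqrt_2PI_pos : 0 < sqrt (2 * PI).
Proof. apply sqrt_lt_R0. pose proof PI_RGT_0. lra. Qed.

Lemma sqrt_2PI_ge : 2.4 <= sqrt (2 * PI).
Proof. pose proof PI2_3_2. rewrite <- (sqrt_square 2.4) by lra. apply sqrt_le_1_alt. lra. Qed.

Lemma Rabs_RInt_gauss_le x : Rabs (RInt gauss 0 x) <= sqrt (2 * PI) / 2.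
Proof.
  pose proof (gauss_integral_identity x). pose proof (gauss_aux_nonneg x).
  pose proof sqrt_2PI_pos. pose proof PI_RGT_0.
  assert (Hs : sqrt (2 * PI) * sqrt (2 * PI) = 2 * PI) by (apply sqrt_sqrt; lra).
  rewrite <- (Rabs_right (sqrt (2 * PI) / 2)) by lra. apply Rsqr_le_abs_0.
  unfold Rsqr. simpl in *. nra.
Qed.

Lemma Phi_gauss x : Phi x = / 2 + RInt gauss 0 x / sqrt (2 * PI).
Proof. reflexivity. Qed.

Lemma Phi_bounds x : 0 <= Phi x <= 1.
Proof.
  rewrite Phi_gauss. pose proof (Rabs_RInt_gauss_le x) as H. pose proof sqrt_2PI_pos.
  apply Rabs_le_between in H.
  assert (- / 2 <= RInt gauss 0 x / sqrt (2 * PI) <= / 2).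
  { split; apply Rmult_le_reg_r with (sqrt (2 * PI)); auto;
      unfold Rdiv; rewrite Rmult_assoc, Rinv_l; lra. }
  lra.
Qed.

Lemma Phi_sub a b : Phi b - Phi a = RInt gauss a b / sqrt (2 * PI).
Proof.
  rewrite !Phi_gauss, <- (RInt_gauss_Chasles a b). field. apply Rgt_not_eq, sqrt_2PI_pos.
Qed.

Lemma Phi_increment_bounds a b : a <= b -> 0 <= Phi b - Phi a <= b - a.
Proof.
  intros Hab. rewrite Phi_sub. pose proof (RInt_gauss_bounds a b Hab). pose proof sqrt_2PI_ge.
  split; [apply Rdiv_le_0_compat; lra|].
  apply Rle_trans with (RInt gauss a b); [|lra].
  unfold Rdiv. rewrite <- (Rmult_1_r (RInt gauss a b)) at 2. apply Rmult_le_compat_l; [lra|].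
  rewrite <- Rinv_1. apply Rinv_le_contravar; lra.
Qed.

Lemma Phi_le_compat a b : a <= b -> Phi a <= Phi b.
Proof. intros Hab. pose proof (Phi_increment_bounds a b Hab). lra. Qed.

Lemma Phi_lipschitz a b : Rabs (Phi a - Phi b) <= Rabs (a - b).
Proof.
  rewrite <- (Rmult_1_l (Rabs (a - b))). apply Rabs_sub_le_of_increments; [exact Phi_le_compat|].
  intros u v Huv. pose proof (Phi_increment_bounds u v Huv). lra.
Qed.

Lemma Phi_1_bounds : 1/2 < Phi 1 <= 15/16.
Proof.
  rewrite Phi_gauss. pose proof (RInt_gauss_bounds 0 1 ltac:(lra)). pose proof sqrt_2PI_ge.
  assert (0 < RInt gauss 0 1).
  { apply RInt_gt_0; [lra| |intros; apply continuous_gauss]. intros; apply gauss_bounds. }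
  split.
  - assert (0 < RInt gauss 0 1 / sqrt (2 * PI)) by (apply Rdiv_lt_0_compat; lra). lra.
  - assert (RInt gauss 0 1 / sqrt (2 * PI) <= 1 / 2.4).
    { apply Rmult_le_compat; try lra; [left; apply Rinv_0_lt_compat; lra|].
      apply Rinv_le_contravar; lra. }
    lra.
Qed.

(** * The floating-point format *)

Local Notation pow2 z := (powerRZ 2 z).

Lemma pow2_pos z : 0 < pow2 z.
Proof. apply powerRZ_lt. lra. Qed.

Lemma pow2_add a b : pow2 (a + b) = pow2 a * pow2 b.
Proof. apply powerRZ_add. lra. Qed.

Lemma pow2_succ a : pow2 (a + 1) = 2 * pow2 a.
Proof. rewrite pow2_add. simpl. lra. Qed.

Lemma pow2_IZR k : (0 <= k)%Z -> IZR (2 ^ k) = pow2 k.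
Proof.
  intros Hk. rewrite <- (Z2Nat.id k Hk), <- pow_IZR, pow_powerRZ. reflexivity.
Qed.

Lemma pow2_le_compat a b : (a <= b)%Z -> pow2 a <= pow2 b.
Proof.
  intros Hab. replace b with (a + (b - a))%Z by lia.
  rewrite pow2_add, <- (pow2_IZR (b - a)) by lia. pose proof (pow2_pos a).
  assert (1 <= IZR (2 ^ (b - a))) by (apply IZR_le; pose proof (Z.pow_pos_nonneg 2 (b - a)); lia).
  nra.
Qed.

Lemma Rabs_signed_mantissa (b : bool) m z : (0 <= m)%Z ->
  Rabs ((if b then -1 else 1) * IZR m * pow2 z) = IZR m * pow2 z.
Proof.
  intros Hm. pose proof (pow2_pos z). assert (0 <= IZR m) by (apply IZR_le; exact Hm).
  destruct b; [rewrite Rabs_left1 by nra|rewrite Rabs_right by nra]; ring.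
Qed.

Section Format.

Variables E M : nat.
Hypothesis hE : (5 <= E)%nat.
Hypothesis hM : (3 <= M)%nat.
Hypothesis hME : (M <= 2 ^ (E - 1))%nat.

Local Notation emin := (emin E).
Local Notation emax := (emax E).
Local Notation MZ := (Z.of_nat M).
Local Notation inF := (inF E M).
(* The spacing of the floats in [[1, 2)]. *)
Local Notation ulp1 := (pow2 (- MZ)).

Lemma format_bounds : (15 <= emax)%Z /\ emin = (1 - emax)%Z /\ (MZ <= emax + 1)%Z /\ (3 <= MZ)%Z.
Proof.
  unfold Defs.emin, Defs.emax.
  assert (H1 : (MZ <= 2 ^ (Z.of_nat E - 1))%Z).
  { replace (Z.of_nat E - 1)%Z with (Z.of_nat (E - 1)) by lia.
    assert (H : (MZ <= Z.of_nat (2 ^ (E - 1)))%Z) by lia. rewrite Nat2Z.inj_pow in H. exact H. }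
  assert (H2 : (2 ^ 4 <= 2 ^ (Z.of_nat E - 1))%Z) by (apply Z.pow_le_mono_r; lia).
  simpl in H2. lia.
Qed.

Lemma two_pow_MZ_pos : (0 < 2 ^ MZ)%Z.
Proof. apply Z.pow_pos_nonneg; lia. Qed.

Lemma two_pow_MZ_succ : (2 ^ (MZ + 1) = 2 * 2 ^ MZ)%Z.
Proof. rewrite Z.pow_add_r by lia. lia. Qed.

Lemma pow2_sub_MZ k : pow2 (k - MZ) = pow2 k * ulp1.
Proof. rewrite <- pow2_add. reflexivity. Qed.

Lemma ulp1_bounds : 0 < ulp1 <= 1/8.
Proof.
  pose proof format_bounds. split; [apply pow2_pos|].
  replace (1/8) with (pow2 (-3)) by (simpl; field). apply pow2_le_compat. lia.
Qed.

Lemma eps_eq : eps M = ulp1 / 2.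
Proof. unfold eps. replace (- MZ - 1)%Z with (- MZ + - 1)%Z by lia. rewrite pow2_add. simpl. field. Qed.

Lemma pow2_MZ_mul k : IZR (2 ^ MZ) * pow2 (k - MZ) = pow2 k.
Proof. rewrite pow2_IZR, <- pow2_add by lia. f_equal. lia. Qed.

Lemma inF_0 : inF 0.
Proof.
  pose proof format_bounds. pose proof two_pow_MZ_succ. pose proof two_pow_MZ_pos.
  exists false, 0%Z, emin. repeat split; try lia. simpl. ring.
Qed.

Lemma inF_opp x : inF x -> inF (- x).
Proof.
  intros (b & m & e & Hm & He & ->). exists (negb b), m, e.
  repeat split; try lia. destruct b; simpl; ring.
Qed.

Lemma inF_grid_point j k : (Z.abs j <= 2 ^ (MZ + 1))%Z -> (emin <= k <= emax - 1)%Z ->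
  inF (IZR j * pow2 (k - MZ)).
Proof.
  intros Hj Hk. pose proof format_bounds. pose proof two_pow_MZ_succ. pose proof two_pow_MZ_pos.
  destruct (Z.eq_dec (Z.abs j) (2 ^ (MZ + 1))) as [Heq|Hne].
  - exists (j <? 0)%Z, (2 ^ MZ)%Z, (k + 1)%Z. repeat split; try lia.
    replace (k + 1 - MZ)%Z with (k - MZ + 1)%Z by lia. rewrite pow2_succ.
    destruct (Z.ltb_spec j 0); [replace j with (- (2 * 2 ^ MZ))%Z by lia|replace j with (2 * 2 ^ MZ)%Z by lia];
      rewrite ?opp_IZR, mult_IZR; simpl; ring.
  - exists (j <? 0)%Z, (Z.abs j), k. repeat split; try lia.
    destruct (Z.ltb_spec j 0); [replace (Z.abs j) with (- j)%Z by lia|replace (Z.abs j) with j by lia];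
      rewrite ?opp_IZR; ring.
Qed.

Lemma inF_pow2 k : (emin <= k <= emax)%Z -> inF (pow2 k).
Proof.
  intros Hk. pose proof format_bounds. pose proof two_pow_MZ_succ. pose proof two_pow_MZ_pos.
  exists false, (2 ^ MZ)%Z, k. repeat split; try lia. rewrite <- pow2_MZ_mul. ring.
Qed.

Lemma Omega_eq : Omega E M = IZR (2 ^ (MZ + 1) - 1) * pow2 (emax - MZ).
Proof.
  pose proof format_bounds. unfold Omega.
  rewrite minus_IZR, pow2_IZR, pow2_succ by lia.
  replace emax with (MZ + (emax - MZ))%Z at 1 by lia. rewrite pow2_add, powerRZ_neg'.
  pose proof (pow2_pos MZ). field. lra.
Qed.

Lemma inF_Rabs_le_Omega x : inF x -> Rabs x <= Omega E M.
Proof.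
  intros (b & m & e & Hm & He & ->). rewrite Omega_eq, Rabs_signed_mantissa by lia.
  apply Rmult_le_compat; [apply IZR_le; lia|left; apply pow2_pos|apply IZR_le; lia|].
  apply pow2_le_compat. lia.
Qed.

Lemma inF_Rabs_ge x : inF x -> x <> 0 -> pow2 (emin - MZ) <= Rabs x.
Proof.
  intros (b & m & e & Hm & He & ->) Hx. rewrite Rabs_signed_mantissa by lia.
  assert (m <> 0%Z) by (intros ->; apply Hx; simpl; ring).
  assert (1 <= IZR m) by (apply IZR_le; lia).
  pose proof (pow2_le_compat (emin - MZ) (e - MZ) ltac:(lia)). pose proof (pow2_pos (e - MZ)). nra.
Qed.

Lemma inF_grid x k : inF x -> pow2 k <= Rabs x -> exists j, x = IZR j * pow2 (k - MZ).
Proof.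
  intros (b & m & e & Hm & He & ->) Hk. destruct (Z_le_gt_dec k e).
  - exists (if b then - (m * 2 ^ (e - k)) else m * 2 ^ (e - k))%Z.
    replace (e - MZ)%Z with ((e - k) + (k - MZ))%Z by lia. rewrite pow2_add.
    destruct b; rewrite ?opp_IZR, mult_IZR, pow2_IZR by lia; ring.
  - exfalso. rewrite Rabs_signed_mantissa in Hk by lia.
    assert (Hm' : IZR m <= IZR (2 ^ (MZ + 1)) - 1) by (rewrite <- minus_IZR; apply IZR_le; lia).
    rewrite pow2_IZR in Hm' by lia.
    assert (pow2 (MZ + 1) * pow2 (e - MZ) = pow2 (e + 1)) by (rewrite <- pow2_add; f_equal; lia).
    pose proof (pow2_le_compat (e + 1) k ltac:(lia)). pose proof (pow2_pos (e - MZ)). nra.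
Qed.

Lemma inF_dist_ge k x z : inF x -> inF z -> pow2 k <= Rabs x -> pow2 k <= Rabs z -> x <> z ->
  pow2 k * ulp1 <= Rabs (x - z).
Proof.
  intros Hx Hz Hkx Hkz Hxz. rewrite <- pow2_sub_MZ.
  destruct (inF_grid x k Hx Hkx) as [i ->], (inF_grid z k Hz Hkz) as [j ->].
  assert (i <> j) by (intros ->; apply Hxz; reflexivity).
  replace (IZR i * pow2 (k - MZ) - IZR j * pow2 (k - MZ)) with (IZR (i - j) * pow2 (k - MZ))
    by (rewrite minus_IZR; ring).
  rewrite Rabs_mult, (Rabs_right (pow2 _)) by (left; apply pow2_pos).
  assert (1 <= Rabs (IZR (i - j))) by (rewrite <- abs_IZR; apply IZR_le; lia).
  pose proof (pow2_pos (k - MZ)). nra.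
Qed.
Lemma inF_dist_ge_below k x z : inF x -> inF z -> pow2 (k + 1) <= z -> x < z ->
  pow2 k * ulp1 <= z - x.
Proof.
  intros Hx Hz Hkz Hxz. pose proof format_bounds. rewrite pow2_succ in Hkz.
  pose proof (pow2_pos k). pose proof (pow2_le_compat (- MZ) 0 ltac:(lia)) as Hu. simpl in Hu.
  destruct (Rle_dec (pow2 k) x).
  - pose proof (inF_dist_ge k x z Hx Hz) as G.
    rewrite (Rabs_right x), (Rabs_right z), (Rabs_left (x - z)) in G by lra.
    pose proof (G ltac:(lra) ltac:(lra) ltac:(lra)). lra.
  - nra.
Qed.

Lemma inF_dist_ge_above k z y : inF z -> inF y -> pow2 k <= z -> z < y -> pow2 k * ulp1 <= y - z.
Proof.
  intros Hz Hy Hkz Hzy. pose proof (pow2_pos k). pose proof (inF_dist_ge k y z Hy Hz) as G.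
  rewrite (Rabs_right y), (Rabs_right z), (Rabs_right (y - z)) in G by lra. apply G; lra.
Qed.


Definition Zrange (a : Z) (n : nat) : list Z := map (fun i => (a + Z.of_nat i)%Z) (seq 0 n).

Lemma In_Zrange a n z : In z (Zrange a n) <-> (a <= z < a + Z.of_nat n)%Z.
Proof.
  unfold Zrange. rewrite in_map_iff. split.
  - intros (i & <- & Hi). apply in_seq in Hi. lia.
  - intros Hz. exists (Z.to_nat (z - a)). rewrite in_seq. lia.
Qed.

Definition float_list : list R :=
  flat_map (fun b : bool => flat_map (fun m =>
    map (fun e => (if b then -1 else 1) * IZR m * pow2 (e - MZ)) (Zrange emin (Z.to_nat (emax - emin + 1))))
    (Zrange 0 (Z.to_nat (2 ^ (MZ + 1))))) (true :: false :: nil).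

Lemma In_float_list x : In x float_list <-> inF x.
Proof.
  pose proof format_bounds. unfold float_list. rewrite in_flat_map. split.
  - intros (b & _ & Hx). apply in_flat_map in Hx as (m & Hm & Hx).
    apply in_map_iff in Hx as (e & <- & He). rewrite In_Zrange in Hm, He.
    exists b, m, e. repeat split; lia.
  - intros (b & m & e & Hm & He & ->). exists b. split; [destruct b; simpl; auto|].
    apply in_flat_map. exists m. rewrite In_Zrange. split; [lia|].
    apply in_map_iff. exists e. rewrite In_Zrange. split; [reflexivity|lia].
Qed.

Lemma list_nearest (l : list R) r : l <> nil ->
  exists y, In y l /\ forall z, In z l -> Rabs (r - y) <= Rabs (r - z).
Proof.
  induction l as [|a l IH]; intros Hl; [congruence|].
  destruct l as [|b l'].
  - exists a. split; [left; reflexivity|]. intros z [<-|[]]. lra.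
  - destruct IH as (y & Hy & Hmin); [congruence|].
    destruct (Rle_dec (Rabs (r - a)) (Rabs (r - y))).
    + exists a. split; [left; reflexivity|].
      intros z [<-|Hz]; [lra|]. specialize (Hmin z Hz). lra.
    + exists y. split; [right; exact Hy|]. intros z [<-|Hz]; [lra|auto].
Qed.

Definition consecutive (x y : R) : Prop :=
  inF x /\ inF y /\ x < y /\ forall w, inF w -> ~ (x < w < y).

Definition canonical_repr (x : R) (b : bool) (m e : Z) : Prop :=
  (((2 ^ MZ <= m < 2 ^ (MZ + 1))%Z /\ (emin <= e <= emax)%Z) \/
   ((0 <= m < 2 ^ MZ)%Z /\ e = emin)) /\
  x = (if b then -1 else 1) * IZR m * pow2 (e - MZ).

Lemma last_bit_zero_intro x b m e : canonical_repr x b m e -> Z.even m = true ->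
  last_bit_zero E M x.
Proof. intros [Hc Hx] Hm. exists b, m, e. auto. Qed.

(* Induction on [e - emin]: double the mantissa and lower the exponent until the
   representation is normal or the exponent reaches [emin]. *)
Lemma canonical_repr_exists x : inF x -> exists b m e, canonical_repr x b m e.
Proof.
  pose proof format_bounds. pose proof two_pow_MZ_succ. pose proof two_pow_MZ_pos.
  intros (b & m & e & Hm & He & ->). exists b.
  enough (Hn : forall n m e, Z.of_nat n = (e - emin)%Z -> (0 <= m < 2 ^ (MZ + 1))%Z ->
    (emin <= e <= emax)%Z ->
    exists m' e', canonical_repr (IZR m * pow2 (e - MZ)) false m' e').
  { destruct (Hn (Z.to_nat (e - emin)) m e) as (m' & e' & Hc & Heq); try lia.
    exists m', e'. split; [exact Hc|]. simpl in Heq. rewrite Rmult_assoc, Heq. ring. }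
  induction n as [|n IH]; intros m' e' Hn Hm' He'.
  - exists m', e'. split; [|simpl; ring].
    destruct (Z_le_gt_dec (2 ^ MZ) m'); [left|right]; lia.
  - destruct (Z_le_gt_dec (2 ^ MZ) m') as [Hbig|Hsmall].
    + exists m', e'. split; [left; lia|simpl; ring].
    + destruct (IH (2 * m')%Z (e' - 1)%Z) as (m'' & e'' & Hc & Heq); try lia.
      exists m'', e''. split; [exact Hc|]. rewrite <- Heq, mult_IZR.
      replace (e' - MZ)%Z with ((e' - 1 - MZ) + 1)%Z by lia. rewrite pow2_succ. ring.
Qed.

Lemma canonical_repr_pos x b m e : canonical_repr x b m e -> 0 < x -> b = false.
Proof.
  intros [Hc ->] Hx. destruct b; [exfalso|reflexivity].
  assert (0 <= IZR m) by (apply IZR_le; destruct Hc; lia).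
  pose proof (pow2_pos (e - MZ)). nra.
Qed.

Lemma canonical_repr_bounds x m e : canonical_repr x false m e ->
  x < pow2 (e + 1) /\ ((2 ^ MZ <= m)%Z -> pow2 e <= x).
Proof.
  pose proof two_pow_MZ_succ as H2M. intros [Hc ->]. pose proof (pow2_pos (e - MZ)).
  rewrite <- (pow2_MZ_mul e), <- (pow2_MZ_mul (e + 1)).
  replace (e + 1 - MZ)%Z with (e - MZ + 1)%Z by lia. rewrite pow2_succ.
  assert (Hlt : IZR m < IZR (2 ^ (MZ + 1))) by (apply IZR_lt; lia). rewrite H2M, mult_IZR in Hlt.
  split; [simpl in *; nra|]. intros Hm. apply IZR_le in Hm. simpl. nra.
Qed.

(* Of two consecutive positive floats with odd canonical mantissas, the larger cannot be a power
   of two, so either [pow2 e2] or the float with mantissa [m1 + 1] lies strictly between them. *)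
Lemma consecutive_pos_last_bit_zero y z : consecutive y z -> 0 < y ->
  last_bit_zero E M y \/ last_bit_zero E M z.
Proof.
  intros (Hy & Hz & Hyz & Hno) Hy0. pose proof format_bounds. pose proof two_pow_MZ_succ.
  pose proof two_pow_MZ_pos.
  destruct (canonical_repr_exists y Hy) as (b1 & m1 & e1 & Hc1).
  destruct (canonical_repr_exists z Hz) as (b2 & m2 & e2 & Hc2).
  rewrite (canonical_repr_pos _ _ _ _ Hc1 Hy0) in Hc1.
  rewrite (canonical_repr_pos _ _ _ _ Hc2 ltac:(lra)) in Hc2.
  destruct (Z.even m1) eqn:Ev1; [left; eapply last_bit_zero_intro; eauto|].
  destruct (Z.even m2) eqn:Ev2; [right; eapply last_bit_zero_intro; eauto|].
  exfalso. pose proof (canonical_repr_bounds _ _ _ Hc1) as [Hy1 Hy2].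
  pose proof (canonical_repr_bounds _ _ _ Hc2) as [Hz1 Hz2].
  destruct Hc1 as [Hc1 Hy'], Hc2 as [Hc2 Hz']. rewrite Rmult_1_l in Hy', Hz'.
  destruct (Z.lt_total e1 e2) as [Hlt|[<-|Hgt]].
  - assert (Hm2 : (2 ^ MZ < m2)%Z).
    { assert (m2 <> 2 ^ MZ)%Z by (intros ->; rewrite Z.even_pow in Ev2 by lia; discriminate).
      destruct Hc1, Hc2; lia. }
    apply (Hno (pow2 e2)); [apply inF_pow2; destruct Hc2; lia|]. split.
    + pose proof (pow2_le_compat (e1 + 1) e2 ltac:(lia)). lra.
    + rewrite Hz', <- (pow2_MZ_mul e2).
      apply Rmult_lt_compat_r; [apply pow2_pos|apply IZR_lt; lia].
  - assert (Hm : (m1 < m2)%Z).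
    { apply lt_IZR. rewrite Hy', Hz' in Hyz. pose proof (pow2_pos (e1 - MZ)). nra. }
    assert (m1 + 1 <> m2)%Z by (intros <-; rewrite Z.even_add, Ev1 in Ev2; discriminate).
    apply (Hno (IZR (m1 + 1) * pow2 (e1 - MZ))).
    + exists false, (m1 + 1)%Z, e1. repeat split; try (destruct Hc1, Hc2; lia). simpl. ring.
    + rewrite Hy', Hz'.
      split; (apply Rmult_lt_compat_r; [apply pow2_pos|apply IZR_lt; lia]).
  - assert (Hm1 : (2 ^ MZ <= m1)%Z) by (destruct Hc1, Hc2; lia).
    pose proof (Hy2 Hm1). pose proof (pow2_le_compat (e2 + 1) e1 ltac:(lia)). lra.
Qed.

Lemma consecutive_opp x y : consecutive x y -> consecutive (- y) (- x).
Proof.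
  intros (Hx & Hy & Hxy & Hno).
  split; [apply inF_opp, Hy|]. split; [apply inF_opp, Hx|]. split; [lra|]. intros w Hw Hb. apply (Hno (- w)); [apply inF_opp, Hw|lra].
Qed.

Lemma last_bit_zero_opp x : last_bit_zero E M x -> last_bit_zero E M (- x).
Proof.
  intros (b & m & e & Hc & -> & Hm). exists (negb b), m, e.
  repeat split; auto. destruct b; simpl; ring.
Qed.

Lemma last_bit_zero_0 : last_bit_zero E M 0.
Proof.
  pose proof format_bounds. pose proof two_pow_MZ_pos.
  exists false, 0%Z, emin. repeat split; auto; [right; lia|]. simpl. ring.
Qed.

Lemma consecutive_last_bit_zero y z : consecutive y z -> last_bit_zero E M y \/ last_bit_zero E M z.
Proof.
  intros Hyz. pose proof Hyz as (Hy & Hz & Hlt & Hno).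
  destruct (Rlt_le_dec 0 y); [apply consecutive_pos_last_bit_zero; auto|].
  destruct (Rlt_le_dec z 0).
  - destruct (consecutive_pos_last_bit_zero (- z) (- y)) as [H|H];
      [apply consecutive_opp, Hyz|lra| |]; [right|left];
      rewrite <- Ropp_involutive; apply last_bit_zero_opp, H.
  - destruct (Req_dec y 0) as [->|]; [left; apply last_bit_zero_0|].
    destruct (Req_dec z 0) as [->|]; [right; apply last_bit_zero_0|].
    exfalso. apply (Hno 0 inF_0). lra.
Qed.

(** * Rounding to nearest *)

Lemma round_spec_exists r : exists y, round_spec E M r y.
Proof.
  destruct (list_nearest float_list r) as (y & Hy & Hmin).
  { intros Hnil. pose proof (proj2 (In_float_list 0) inF_0) as H0. rewrite Hnil in H0. destruct H0. }
  rewrite In_float_list in Hy.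
  assert (Hnear : forall z, inF z -> Rabs (r - y) <= Rabs (r - z))
    by (intros z Hz; apply Hmin, In_float_list, Hz).
  destruct (classic (exists z, inF z /\ Rabs (r - z) = Rabs (r - y) /\ z <> y))
    as [(z & Hz & Hd & Hzy)|Htie].
  - assert (Hmid : r - y = - (r - z)).
    { assert (Hsq : (r - z)² = (r - y)²) by (rewrite (Rsqr_abs (r - z)), (Rsqr_abs (r - y)), Hd; reflexivity).
      unfold Rsqr in Hsq. assert ((z - y) * (z + y - 2 * r) = 0) by nra.
      destruct (Rmult_integral _ _ H); [exfalso; apply Hzy; lra|lra]. }
    assert (Hbetween : forall w, inF w -> ~ (Rmin y z < w < Rmax y z)).
    { intros w Hw Hb. specialize (Hnear w Hw).
      unfold Rmin, Rmax in Hb. destruct (Rle_dec y z);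
        destruct (Rle_dec 0 (r - y)), (Rle_dec 0 (r - w));
        rewrite ?(Rabs_right (r - y)), ?(Rabs_left (r - y)), ?(Rabs_right (r - w)),
          ?(Rabs_left (r - w)) in Hnear by lra; lra. }
    assert (Hcons : consecutive (Rmin y z) (Rmax y z)).
    { unfold Rmin, Rmax. destruct (Rle_dec y z);
        (split; [auto|split; [auto|split; [destruct (Req_dec y z); subst; lra|]]]);
        intros w Hw; specialize (Hbetween w Hw); unfold Rmin, Rmax in Hbetween;
        destruct (Rle_dec y z); auto; lra. }
    assert (Hlbz : last_bit_zero E M y \/ last_bit_zero E M z).
    { unfold Rmin, Rmax in Hcons. destruct (Rle_dec y z);
        destruct (consecutive_last_bit_zero _ _ Hcons); auto. }
    destruct Hlbz as [Hl|Hl].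
    + exists y. repeat split; auto.
    + exists z. repeat split; auto. intros w Hw. rewrite Hd. apply Hnear, Hw.
  - exists y. repeat split; auto.
    intros z Hz Hd Hzy. exfalso. apply Htie. exists z. auto.
Qed.

Definition fl (r : R) : R := epsilon (inhabits 0) (round_spec E M r).

Lemma fl_spec r : round_spec E M r (fl r).
Proof. unfold fl. apply epsilon_spec, round_spec_exists. Qed.

Lemma fl_inF r : inF (fl r).
Proof. apply fl_spec. Qed.

Lemma fl_nearest r z : inF z -> Rabs (r - fl r) <= Rabs (r - z).
Proof. apply fl_spec. Qed.

Lemma fl_id x : inF x -> fl x = x.
Proof.
  intros Hx. pose proof (fl_nearest x x Hx) as Hn. rewrite Rminus_diag, Rabs_R0 in Hn.
  pose proof (Rabs_pos (x - fl x)). apply Rminus_diag_uniq_sym, Rabs_eq_0. lra.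
Qed.

Lemma fl_le_compat r1 r2 : r1 <= r2 -> fl r1 <= fl r2.
Proof.
  intros H12. destruct (Rle_lt_dec (fl r1) (fl r2)) as [|Hlt]; [assumption|exfalso].
  destruct H12 as [H12|<-]; [|lra].
  pose proof (Rsqr_le_abs_1 _ _ (fl_nearest r1 (fl r2) (fl_inF r2))).
  pose proof (Rsqr_le_abs_1 _ _ (fl_nearest r2 (fl r1) (fl_inF r1))).
  unfold Rsqr in *. nra.
Qed.

Lemma fl_le r z : inF z -> r <= z -> fl r <= z.
Proof. intros Hz Hr. rewrite <- (fl_id z Hz). apply fl_le_compat, Hr. Qed.

Lemma fl_ge r z : inF z -> z <= r -> z <= fl r.
Proof. intros Hz Hr. rewrite <- (fl_id z Hz). apply fl_le_compat, Hr. Qed.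

(* The points [j * pow2 (k - MZ)] with [|j| <= 2 ^ (MZ + 1)] are floats covering
   [[-pow2 (k + 1), pow2 (k + 1)]] with spacing [pow2 (k - MZ)]. *)
Lemma fl_error r k : (emin <= k <= emax - 1)%Z -> Rabs r <= pow2 (k + 1) ->
  Rabs (r - fl r) <= pow2 k * ulp1 / 2.
Proof.
  intros Hk Hr. rewrite <- pow2_sub_MZ. pose proof format_bounds. pose proof two_pow_MZ_succ.
  set (u := pow2 (k - MZ)). assert (Hu : 0 < u) by apply pow2_pos.
  assert (Hru : Rabs (r / u) <= IZR (2 ^ (MZ + 1))).
  { rewrite pow2_IZR by lia. unfold Rdiv. rewrite Rabs_mult, (Rabs_inv u), (Rabs_right u) by lra.
    replace (pow2 (MZ + 1)) with (pow2 (k + 1) * / u)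
      by (unfold u; replace (k + 1)%Z with ((MZ + 1) + (k - MZ))%Z by lia;
          rewrite pow2_add; field; apply Rgt_not_eq, pow2_pos).
    apply Rmult_le_compat_r; [left; apply Rinv_0_lt_compat|]; lra. }
  apply Rabs_le_between in Hru.
  destruct (archimed (r / u + / 2)) as [Hup1 Hup2].
  set (j := (up (r / u + / 2) - 1)%Z).
  assert (Hj : r / u - / 2 <= IZR j <= r / u + / 2) by (unfold j; rewrite minus_IZR; lra).
  assert (Hjb : (Z.abs j <= 2 ^ (MZ + 1))%Z).
  { assert (IZR (- 2 ^ (MZ + 1) - 1) < IZR j < IZR (2 ^ (MZ + 1) + 1)) as [Hj1 Hj2]
      by (rewrite minus_IZR, plus_IZR, opp_IZR; lra).
    apply lt_IZR in Hj1, Hj2. lia. }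
  eapply Rle_trans; [apply (fl_nearest r (IZR j * u)), inF_grid_point; auto|].
  replace (r - IZR j * u) with ((r / u - IZR j) * u) by (field; lra).
  rewrite Rabs_mult, (Rabs_right u) by lra.
  assert (Rabs (r / u - IZR j) <= / 2) by (apply Rabs_le; lra). nra.
Qed.

Lemma fl_underflow r : 0 <= r < pow2 (emin - MZ) / 2 -> fl r = 0.
Proof.
  intros Hr. destruct (Req_dec (fl r) 0) as [|Hne]; [assumption|exfalso].
  pose proof (fl_nearest r 0 inF_0). pose proof (inF_Rabs_ge _ (fl_inF r) Hne).
  pose proof (Rabs_triang_inv (fl r) r). rewrite Rabs_minus_sym in H1.
  rewrite Rminus_0_r, (Rabs_right r) in H by lra. rewrite (Rabs_right r) in H1 by lra. lra.
Qed.

Lemma fl_lt_compat r1 r2 k : (emin <= k <= emax - 1)%Z -> Rabs r1 <= pow2 (k + 1) ->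
  r1 + pow2 k * ulp1 <= pow2 (k + 1) -> r1 + pow2 k * ulp1 < r2 -> fl r1 < fl r2.
Proof.
  intros Hk Hr1 Hsum Hr2. pose proof format_bounds.
  assert (0 < pow2 k * ulp1) by (apply Rmult_lt_0_compat; apply pow2_pos).
  pose proof (fl_error r1 k Hk Hr1) as H1. apply Rabs_le_between' in H1.
  destruct (Rle_dec r2 (pow2 (k + 1))).
  - assert (Hr2' : Rabs r2 <= pow2 (k + 1)) by (apply Rabs_le; split; apply Rabs_le_between in Hr1; lra).
    pose proof (fl_error r2 k Hk Hr2') as H2. apply Rabs_le_between' in H2. lra.
  - pose proof (fl_ge r2 (pow2 (k + 1)) ltac:(apply inF_pow2; lia) ltac:(lra)). lra.
Qed.

Lemma consecutive_add_ulp k x : (emin <= k <= emax - 1)%Z -> inF x ->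
  pow2 k <= Rabs x -> pow2 k <= Rabs (x + pow2 k * ulp1) ->
  Rabs (x + pow2 k * ulp1) <= pow2 (k + 1) -> consecutive x (x + pow2 k * ulp1).
Proof.
  rewrite <- pow2_sub_MZ. intros Hk Hx Hkx Hky Hy. pose proof format_bounds. pose proof two_pow_MZ_succ.
  set (u := pow2 (k - MZ)) in *. assert (Hu : 0 < u) by apply pow2_pos.
  assert (Huk : u <= pow2 k) by (apply pow2_le_compat; lia).
  split; [exact Hx|]. split; [|split; [lra|]].
  - destruct (inF_grid x k Hx Hkx) as [j Hj]. fold u in Hj.
    replace (x + u) with (IZR (j + 1) * u) in * by (rewrite plus_IZR, Hj; ring).
    apply inF_grid_point; [|lia].
    rewrite Rabs_mult, (Rabs_right u), <- (pow2_MZ_mul (k + 1)), <- abs_IZR in Hy by lra.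
    replace (k + 1 - MZ)%Z with (k - MZ + 1)%Z in Hy by lia. rewrite pow2_succ in Hy.
    apply le_IZR. rewrite two_pow_MZ_succ, mult_IZR. fold u in Hy. nra.
  - intros w Hw Hb.
    assert (Hkw : pow2 k <= Rabs w).
    { destruct (Rle_dec 0 x).
      - rewrite Rabs_right in Hkx |- * by lra. lra.
      - rewrite Rabs_left in Hkx by lra. rewrite Rabs_left1 in Hky by lra.
        rewrite Rabs_left by lra. lra. }
    pose proof (inF_dist_ge k w x Hw Hx Hkw Hkx ltac:(lra)).
    rewrite <- pow2_sub_MZ in H1. fold u in H1. rewrite Rabs_right in H1 by lra. lra.
Qed.

Lemma fsucc_consecutive x y : consecutive x y -> fsucc E M x = FNum y.
Proof.
  intros (Hx & Hy & Hxy & Hno).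
  assert (Hs : fsucc_spec E M x (FNum y)).
  { split; [exact Hy|]. split; [split; [simpl; lra|intros Heq; injection Heq; lra]|].
    intros [w| | |] Hw [Hw1 Hw2]; simpl in *; auto.
    destruct (Rle_lt_dec y w) as [|Hwy]; [assumption|exfalso].
    apply (Hno w Hw). split; [|exact Hwy]. destruct Hw1 as [Hlt| ->]; [exact Hlt|congruence]. }
  assert (Hz : fsucc_spec E M x (fsucc E M x)) by (unfold fsucc; apply epsilon_spec; eauto).
  destruct Hz as (Hz1 & Hz2 & Hz3), Hs as (Hs1 & Hs2 & Hs3).
  specialize (Hz3 _ Hs1 Hs2).
  destruct (fsucc E M x) as [r| | |]; simpl in *; try contradiction; [|destruct Hz2; contradiction].
  specialize (Hs3 (FNum r) Hz1 Hz2). simpl in Hs3. f_equal. lra.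
Qed.

(** * Sufficient criteria for Condition 1 *)

Definition overflow_bound : R := Omega E M + pow2 emax * eps M.

Lemma Rabs_lt_overflow_bound r : Rabs r <= Omega E M -> Rabs r < overflow_bound.
Proof.
  intros Hr. unfold overflow_bound, eps.
  pose proof (pow2_pos emax). pose proof (pow2_pos (- MZ - 1)). nra.
Qed.

Lemma rndf_FNum sg x : Rabs (sg x) < overflow_bound -> rndf E M sg (FNum x) = FNum (fl (sg x)).
Proof.
  intros Hr. unfold overflow_bound in Hr. apply Rabs_def2 in Hr as [Hr1 Hr2].
  simpl. destruct (Rle_dec (sg x) _); [lra|]. destruct (Rle_dec _ (sg x)); [lra|]. reflexivity.
Qed.

Lemma fl_lipschitz (f : R -> R) a b g e L lam : 0 < g -> (a <> b -> g <= Rabs (a - b)) ->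
  Rabs (f a - fl (f a)) <= e -> Rabs (f b - fl (f b)) <= e ->
  Rabs (f a - f b) <= L * Rabs (a - b) -> L <= lam -> 2 * e <= (lam - L) * g ->
  Rabs (fl (f a) - fl (f b)) <= lam * Rabs (a - b).
Proof.
  intros Hg Hgap Ha Hb Hf HL He. destruct (Req_dec a b) as [<-|Hne].
  - rewrite !Rminus_diag, Rabs_R0. lra.
  - specialize (Hgap Hne).
    pose proof (Rabs_triang (fl (f a) - f a) (f a - fl (f b))).
    pose proof (Rabs_triang (f a - f b) (f b - fl (f b))).
    replace (fl (f a) - f a + (f a - fl (f b))) with (fl (f a) - fl (f b)) in H by ring.
    replace (f a - f b + (f b - fl (f b))) with (f a - fl (f b)) in H0 by ring.
    rewrite Rabs_minus_sym in Ha.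
    assert ((lam - L) * g <= (lam - L) * Rabs (a - b)) by (apply Rmult_le_compat_l; lra).
    lra.
Qed.

Lemma C1_of_le_compat (sg : R -> R) c1 c2 :
  (forall x, inF x -> Rabs (sg x) < overflow_bound) ->
  inF c1 -> inF c2 -> c1 <= c2 -> pow2 (emin + 1) <= Rmax (Rabs c1) (Rabs c2) ->
  (forall x y, c1 <= x -> x <= y -> y <= c2 -> sg x <= sg y) ->
  fl (sg c1) = 0 -> 1/16 <= fl (sg c2) <= 9/8 -> Defs.C1 E M (rndf E M sg).
Proof.
  intros Hrange Hc1 Hc2 H12 Hmax Hmono Hz Hv. pose proof eps_eq. pose proof ulp1_bounds.
  exists c1, c2, (fl (sg c2)). repeat split; try assumption.
  - rewrite rndf_FNum, Hz by auto. reflexivity.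
  - apply rndf_FNum. auto.
  - rewrite Rabs_right by lra. nra.
  - rewrite Rabs_right by lra. lra.
  - lra.
  - intros x Hx Hb. exists (fl (sg x)). split; [apply rndf_FNum; auto|].
    rewrite Rmin_left, Rmax_right by lra. rewrite Rmin_left, Rmax_right in Hb by lra.
    rewrite <- Hz. split; apply fl_le_compat, Hmono; lra.
Qed.

(* Convenient sufficient numeric conditions for (C2) and (C3), using [emax >= 15] and [M >= 3]. *)
Lemma Condition1_intro (sg : R -> R) eta eta' lam :
  (forall x, inF x -> Rabs (sg x) < overflow_bound) -> Defs.C1 E M (rndf E M sg) ->
  consecutive eta eta' -> 1/2 <= Rabs eta <= 3 ->
  1/32 <= fl (sg eta) -> fl (sg eta) < fl (sg eta') -> fl (sg eta') <= 2 ->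
  (forall x, inF x -> x <= eta -> fl (sg x) <= fl (sg eta)) ->
  (forall y, inF y -> eta' <= y -> fl (sg eta') <= fl (sg y)) ->
  0 <= lam <= 256 * fl (sg eta) ->
  (forall x, inF x -> x <= eta -> Rabs (fl (sg x) - fl (sg eta)) <= lam * Rabs (x - eta)) ->
  (forall y, inF y -> eta' <= y -> Rabs (fl (sg y) - fl (sg eta')) <= lam * Rabs (y - eta')) ->
  Condition1 E M (rndf E M sg).
Proof.
  intros Hrange HC1 Hcons Heta Hs0 Hs01 Hs1 Hleft Hright Hlam Hlip_l Hlip_r.
  pose proof format_bounds. pose proof eps_eq. pose proof ulp1_bounds.
  assert (Hlo : pow2 (emin + 5) <= 1/32)
    by (replace (1/32) with (pow2 (-5)) by (simpl; field); apply pow2_le_compat; lia).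
  assert (Hhi : 512 <= pow2 (emax - 6))
    by (replace 512 with (pow2 9) by (simpl; ring); apply pow2_le_compat; lia).
  assert (Hlam_hi : 256 <= pow2 (emax - 7))
    by (replace 256 with (pow2 8) by (simpl; ring); apply pow2_le_compat; lia).
  assert (Hmant : 64 <= pow2 (MZ + 3))
    by (replace 64 with (pow2 6) by (simpl; ring); apply pow2_le_compat; lia).
  pose proof Hcons as (Heta_in & Heta'_in & Hlt & _).
  split; [exact HC1|]. exists eta, (fl (sg eta)), (fl (sg eta')). cbv zeta.
  rewrite (fsucc_consecutive eta eta' Hcons), !rndf_FNum by auto.
  rewrite !(Rabs_right (fl _)) by lra.
  split; [exact Heta_in|]. split; [lra|]. split; [reflexivity|]. split; [reflexivity|].
  split; [split; nra|]. split; [split; nra|]. split.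
  - intros x y Hx Hy Hxe Hye. simpl in Hye. left. rewrite !rndf_FNum by auto. simpl. auto.
  - exists lam. split; [split; [lra|]; rewrite Rmin_left by lra; nra|].
    intros x y Hx Hy Hxe Hye. simpl in Hye.
    split; [exists (fl (sg x))|exists (fl (sg y))]; rewrite rndf_FNum by auto; split; auto.
Qed.

Lemma inF_dyadic k c : (-14 <= k <= 14)%Z -> pow2 k = c -> inF c.
Proof. intros Hk <-. apply inF_pow2. pose proof format_bounds. lia. Qed.

Lemma pow2_emin_succ_le_1 : pow2 (emin + 1) <= 1.
Proof. pose proof format_bounds. apply (pow2_le_compat _ 0). lia. Qed.

Lemma inF_1 : inF 1.
Proof. apply (inF_dyadic 0); [lia|reflexivity]. Qed.

Lemma consecutive_1 : consecutive 1 (1 + ulp1).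
Proof.
  pose proof format_bounds. pose proof ulp1_bounds.
  pose proof (consecutive_add_ulp 0 1) as Hc. simpl in Hc. rewrite Rmult_1_l in Hc.
  apply Hc; [lia|exact inF_1|..]; rewrite Rabs_right; lra.
Qed.

Lemma Condition1_of_relu_like (sg : R -> R) :
  (forall x, 0 <= x -> sg x = x) -> (forall x, x <= 0 -> x <= sg x <= 0) ->
  Condition1 E M (rndf E M sg).
Proof.
  intros Hpos Hneg. pose proof ulp1_bounds.
  pose proof inF_1 as I1. pose proof consecutive_1 as Hcons. pose proof Hcons as (_ & I1h & _).
  assert (Hid : forall x, inF x -> 0 <= x -> fl (sg x) = x) by (intros; rewrite Hpos, fl_id; auto).
  assert (Hle0 : forall x, inF x -> x <= 0 -> x <= fl (sg x) <= 0).
  { intros x Hx Hx0. pose proof (Hneg x Hx0). split; [apply fl_ge|apply fl_le]; auto using inF_0; lra. }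
  assert (Hrange : forall x, inF x -> Rabs (sg x) < overflow_bound).
  { intros x Hx. apply Rabs_lt_overflow_bound. eapply Rle_trans; [|apply (inF_Rabs_le_Omega x Hx)].
    destruct (Rle_dec 0 x); [rewrite Hpos by lra; lra|].
    specialize (Hneg x ltac:(lra)). rewrite !Rabs_left1 by lra. lra. }
  assert (F1 : fl (sg 1) = 1) by (apply Hid; auto; lra).
  assert (F1h : fl (sg (1 + ulp1)) = 1 + ulp1) by (apply Hid; auto; lra).
  apply (Condition1_intro sg 1 (1 + ulp1) 1 Hrange); rewrite ?F1, ?F1h.
  - apply (C1_of_le_compat sg 0 1 Hrange inF_0 I1); rewrite ?F1; try lra.
    + rewrite Rabs_R0, Rabs_R1, Rmax_right by lra. apply pow2_emin_succ_le_1.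
    + intros x y Hx Hxy Hy. rewrite !Hpos by lra. lra.
    + apply Hid; [exact inF_0|lra].
  - exact Hcons.
  - rewrite Rabs_R1. lra.
  - lra.
  - lra.
  - lra.
  - intros x Hx Hx1. destruct (Rle_dec 0 x); [rewrite Hid; auto|pose proof (Hle0 x Hx)]; lra.
  - intros y Hy Hy1. rewrite Hid by (auto; lra). exact Hy1.
  - lra.
  - intros x Hx Hx1. rewrite Rmult_1_l. destruct (Rle_dec 0 x).
    + rewrite Hid by auto. lra.
    + pose proof (Hle0 x Hx ltac:(lra)). rewrite !Rabs_left1 by lra. lra.
  - intros y Hy Hy1. rewrite Hid by (auto; lra). lra.
Qed.

Section MulGate.

Variable phi : R -> R.
Hypothesis phi_bounds : forall x, 0 <= phi x <= 1.
Hypothesis phi_le_compat : forall a b, a <= b -> phi a <= phi b.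
Hypothesis phi_lipschitz : forall a b, Rabs (phi a - phi b) <= 4 * Rabs (a - b).
Hypothesis phi_1_bounds : 1/2 < phi 1 <= 15/16.

Lemma mul_gate_le_compat a b : 0 <= a <= b -> a * phi a <= b * phi b.
Proof. intros Hab. pose proof (phi_le_compat a b ltac:(lra)). pose proof (phi_bounds a). nra. Qed.

Lemma Rabs_mul_gate_sub_le a b : Rabs (a * phi a - b * phi b) <= (1 + 4 * Rabs b) * Rabs (a - b).
Proof.
  replace (a * phi a - b * phi b) with ((a - b) * phi a + b * (phi a - phi b)) by ring.
  eapply Rle_trans; [apply Rabs_triang|]. rewrite !Rabs_mult, (Rabs_right (phi a))
    by (pose proof (phi_bounds a); lra).
  pose proof (phi_bounds a). pose proof (phi_lipschitz a b).
  pose proof (Rabs_pos (a - b)). pose proof (Rabs_pos b). nra.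
Qed.

Lemma mul_gate_no_overflow x : inF x -> Rabs (x * phi x) < overflow_bound.
Proof.
  intros Hx. apply Rabs_lt_overflow_bound. pose proof (inF_Rabs_le_Omega x Hx). pose proof (phi_bounds x).
  rewrite Rabs_mult, (Rabs_right (phi x)) by lra. pose proof (Rabs_pos x). nra.
Qed.

Lemma fl_mul_gate_nonpos x : inF x -> x <= 0 -> x <= fl (x * phi x) <= 0.
Proof.
  intros Hx Hx0. pose proof (phi_bounds x). split; [apply fl_ge|apply fl_le]; auto using inF_0; nra.
Qed.

Lemma fl_mul_gate_1_bounds : 1/2 <= fl (1 * phi 1) <= 1.
Proof.
  pose proof format_bounds.
  split; [apply (fl_ge _ (1/2)); [apply (inF_dyadic (-1)); [lia|simpl; field]|]|apply (fl_le _ 1)];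
    auto using inF_1; lra.
Qed.

Lemma fl_mul_gate_lipschitz_left x : inF x -> x <= 1 ->
  Rabs (fl (x * phi x) - fl (1 * phi 1)) <= 64 * Rabs (x - 1).
Proof.
  intros Hx Hx1. pose proof format_bounds. pose proof ulp1_bounds. pose proof fl_mul_gate_1_bounds.
  pose proof (phi_bounds x). pose proof (phi_bounds 1). destruct (Rle_dec 0 x).
  - apply (fl_lipschitz (fun x => x * phi x) x 1 (ulp1 / 2) (ulp1 / 4) 5); cbv beta; try lra.
    + intros Hne. rewrite Rabs_left by lra.
      pose proof (inF_dist_ge_below (-1) x 1 Hx inF_1) as G. simpl in G.
      specialize (G ltac:(lra) ltac:(lra)). lra.
    + eapply Rle_trans; [apply (fl_error _ (-1)); [lia|]|simpl; lra].
      simpl. rewrite Rabs_right; nra.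
    + eapply Rle_trans; [apply (fl_error _ (-1)); [lia|]|simpl; lra].
      simpl. rewrite Rabs_right; nra.
    + pose proof (Rabs_mul_gate_sub_le x 1) as L. rewrite Rabs_R1 in L. lra.
  - pose proof (fl_mul_gate_nonpos x Hx ltac:(lra)).
    rewrite (Rabs_left (x - 1)), Rabs_left1 by lra. lra.
Qed.

Lemma fl_mul_gate_lipschitz_right y : inF y -> 1 + ulp1 <= y ->
  Rabs (fl (y * phi y) - fl ((1 + ulp1) * phi (1 + ulp1))) <= 64 * Rabs (y - (1 + ulp1)).
Proof.
  intros Hy Hy1. pose proof format_bounds. pose proof ulp1_bounds. pose proof consecutive_1 as (_ & I1h & _).
  pose proof (phi_bounds y). pose proof (phi_bounds (1 + ulp1)). destruct (Rle_dec y 2).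
  - apply (fl_lipschitz (fun x => x * phi x) y (1 + ulp1) ulp1 (ulp1 / 2) 6); cbv beta; try lra.
    + intros Hne. rewrite Rabs_right by lra.
      pose proof (inF_dist_ge_above 0 (1 + ulp1) y I1h Hy) as G. simpl in G.
      specialize (G ltac:(lra) ltac:(lra)). lra.
    + eapply Rle_trans; [apply (fl_error _ 0); [lia|]|simpl; lra].
      simpl. rewrite Rabs_right; nra.
    + eapply Rle_trans; [apply (fl_error _ 0); [lia|]|simpl; lra].
      simpl. rewrite Rabs_right; nra.
    + pose proof (Rabs_mul_gate_sub_le y (1 + ulp1)) as L. rewrite (Rabs_right (1 + ulp1)) in L by lra.
      pose proof (Rabs_pos (y - (1 + ulp1))). nra.
  - assert (fl (y * phi y) <= y) by (apply fl_le; auto; nra).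
    assert (fl ((1 + ulp1) * phi (1 + ulp1)) <= fl (y * phi y))
      by (apply fl_le_compat, mul_gate_le_compat; lra).
    assert (0 <= fl ((1 + ulp1) * phi (1 + ulp1))) by (apply fl_ge; auto using inF_0; nra).
    rewrite !Rabs_right by lra. lra.
Qed.

Lemma Condition1_of_mul_gate : Condition1 E M (rndf E M (fun x => x * phi x)).
Proof.
  pose proof format_bounds. pose proof ulp1_bounds. pose proof fl_mul_gate_1_bounds.
  pose proof consecutive_1 as Hcons. pose proof Hcons as (I1 & I1h & _).
  pose proof (phi_bounds (1 + ulp1)). pose proof (phi_le_compat 1 (1 + ulp1) ltac:(lra)).
  apply (Condition1_intro _ 1 (1 + ulp1) 64 mul_gate_no_overflow); cbv beta.
  - apply (C1_of_le_compat _ 0 1 mul_gate_no_overflow inF_0 I1); cbv beta; try lra.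
    + rewrite Rabs_R0, Rabs_R1, Rmax_right by lra. apply pow2_emin_succ_le_1.
    + intros x y Hx Hxy Hy. apply mul_gate_le_compat. lra.
    + rewrite Rmult_0_l. apply fl_id, inF_0.
  - exact Hcons.
  - rewrite Rabs_R1. lra.
  - lra.
  - apply (fl_lt_compat _ _ (-1)); simpl; [lia|rewrite Rabs_right; lra|lra|nra].
  - apply fl_le; [apply (inF_dyadic 1); [lia|simpl; field]|nra].
  - intros x Hx Hx1. destruct (Rle_dec 0 x).
    + apply fl_le_compat, mul_gate_le_compat. lra.
    + pose proof (fl_mul_gate_nonpos x Hx ltac:(lra)). lra.
  - intros y Hy Hy1. apply fl_le_compat, mul_gate_le_compat. lra.
  - lra.
  - exact fl_mul_gate_lipschitz_left.
  - exact fl_mul_gate_lipschitz_right.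
Qed.

End MulGate.

Lemma consecutive_half : consecutive (1/2) (1/2 + ulp1 / 2).
Proof.
  pose proof format_bounds. pose proof ulp1_bounds.
  pose proof (consecutive_add_ulp (-1) (1/2)) as Hc. simpl in Hc.
  replace (1/2 + ulp1 / 2) with (1/2 + / (2 * 1) * ulp1) by field.
  apply Hc; [lia|apply (inF_dyadic (-1)); [lia|simpl; field]|..]; rewrite Rabs_right; lra.
Qed.

Lemma tanh_no_overflow x : Rabs (tanh x) < overflow_bound.
Proof.
  apply Rabs_lt_overflow_bound. pose proof (inF_Rabs_le_Omega 1 inF_1) as HO.
  pose proof (tanh_bounds x). rewrite Rabs_R1 in HO. apply Rabs_le. lra.
Qed.

Lemma fl_tanh_error x : Rabs (tanh x - fl (tanh x)) <= ulp1 / 4.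
Proof.
  pose proof format_bounds. eapply Rle_trans; [apply (fl_error _ (-1)); [lia|]|simpl; lra].
  pose proof (tanh_bounds x). simpl. apply Rabs_le. lra.
Qed.

Lemma fl_tanh_lipschitz_left x : inF x -> x <= 1/2 ->
  Rabs (fl (tanh x) - fl (tanh (1/2))) <= 16 * Rabs (x - 1/2).
Proof.
  intros Hx Hx1. pose proof ulp1_bounds. pose proof consecutive_half as (Ihalf & _).
  apply (fl_lipschitz tanh x (1/2) (ulp1 / 4) (ulp1 / 4) 4);
    auto using fl_tanh_error, tanh_lipschitz; try lra.
  intros Hne. rewrite Rabs_left by lra.
  pose proof (inF_dist_ge_below (-2) x (1/2) Hx Ihalf) as G. simpl in G.
  specialize (G ltac:(lra) ltac:(lra)). lra.
Qed.

Lemma fl_tanh_lipschitz_right y : inF y -> 1/2 + ulp1 / 2 <= y ->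
  Rabs (fl (tanh y) - fl (tanh (1/2 + ulp1 / 2))) <= 16 * Rabs (y - (1/2 + ulp1 / 2)).
Proof.
  intros Hy Hy1. pose proof ulp1_bounds. pose proof consecutive_half as (_ & Ieta' & _).
  apply (fl_lipschitz tanh y (1/2 + ulp1 / 2) (ulp1 / 2) (ulp1 / 4) 4);
    auto using fl_tanh_error, tanh_lipschitz; try lra.
  intros Hne. rewrite Rabs_right by lra.
  pose proof (inF_dist_ge_above (-1) (1/2 + ulp1 / 2) y Ieta' Hy) as G. simpl in G.
  specialize (G ltac:(lra) ltac:(lra)). lra.
Qed.

Lemma Condition1_tanh : Condition1 E M (rndf E M tanh_act).
Proof.
  unfold tanh_act. pose proof format_bounds. pose proof ulp1_bounds.
  pose proof consecutive_half as Hcons. pose proof Hcons as (Ihalf & Ieta' & _).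
  assert (Iquarter : inF (1/4)) by (apply (inF_dyadic (-2)); [lia|simpl; field]).
  pose proof tanh_1_ge. pose proof (tanh_bounds 1). pose proof tanh_half_bounds.
  pose proof (tanh_le_compat (1/2) (1/2 + ulp1 / 2) ltac:(lra)). pose proof (tanh_bounds (1/2 + ulp1 / 2)).
  assert (Hs0 : 1/4 <= fl (tanh (1/2)) <= 1/2)
    by (split; [apply (fl_ge _ (1/4))|apply (fl_le _ (1/2))]; auto; lra).
  assert (Hno : forall x, inF x -> Rabs (tanh x) < overflow_bound) by (intros; apply tanh_no_overflow).
  apply (Condition1_intro tanh (1/2) (1/2 + ulp1 / 2) 16 Hno).
  - apply (C1_of_le_compat tanh 0 1 Hno inF_0 inF_1); try lra.
    + rewrite Rabs_R0, Rabs_R1, Rmax_right by lra. apply pow2_emin_succ_le_1.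
    + intros x y _ Hxy _. apply tanh_le_compat, Hxy.
    + rewrite tanh_0. apply fl_id, inF_0.
    + assert (1/2 <= fl (tanh 1) <= 1)
        by (split; [apply (fl_ge _ (1/2))|apply (fl_le _ 1)]; auto using inF_1; lra).
      lra.
  - exact Hcons.
  - rewrite Rabs_right; lra.
  - lra.
  - apply (fl_lt_compat _ _ (-2)); simpl; [lia|rewrite Rabs_right; lra|lra|].
    pose proof (tanh_increment_half (ulp1 / 2) ltac:(lra)). lra.
  - apply Rle_trans with 1; [apply fl_le; [apply inF_1|lra]|lra].
  - intros x _ Hx. apply fl_le_compat, tanh_le_compat, Hx.
  - intros y _ Hy. apply fl_le_compat, tanh_le_compat, Hy.
  - lra.
  - exact fl_tanh_lipschitz_left.
  - exact fl_tanh_lipschitz_right.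
Qed.

Lemma pow2_emax_le_Omega : pow2 emax <= Omega E M.
Proof.
  unfold Omega. pose proof (pow2_pos emax). pose proof ulp1_bounds. nra.
Qed.

Lemma overflow_margin_ge : 1/4 <= pow2 emax * eps M.
Proof.
  pose proof format_bounds. unfold eps. rewrite <- pow2_add.
  replace (1/4) with (pow2 (-2)) by (simpl; field). apply pow2_le_compat. lia.
Qed.

(* [exp (- 2 ^ emax) <= 2 ^ (- 2 ^ emax)], while half the least positive float is
   [2 ^ (emin - M - 1) = 2 ^ (- emax - M)]. *)
Lemma exp_opp_pow2_emax_lt : exp (- pow2 emax) < pow2 (emin - MZ) / 2.
Proof.
  pose proof format_bounds.
  assert (Hz : (emax + MZ + 1 <= 2 ^ emax)%Z).
  { assert (emax - 2 < 2 ^ (emax - 2))%Z by (apply Z.pow_gt_lin_r; lia).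
    replace emax with ((emax - 2) + 2)%Z at 2 by lia. rewrite Z.pow_add_r by lia. simpl (2 ^ 2)%Z. lia. }
  set (N := Z.to_nat (emax + MZ + 1)).
  assert (HN : INR N <= pow2 emax).
  { rewrite INR_IZR_INZ. unfold N. rewrite Z2Nat.id, <- pow2_IZR by lia. apply IZR_le, Hz. }
  assert (H1 : exp (- pow2 emax) <= / exp 1 ^ N).
  { rewrite <- exp_mult_INR, Rmult_1_r, <- exp_Ropp. apply exp_le_compat. lra. }
  assert (H2 : 2 ^ N = 2 * pow2 (emax + MZ)).
  { rewrite pow_powerRZ. unfold N. rewrite Z2Nat.id, <- pow2_succ by lia. reflexivity. }
  assert (H3 : 2 ^ N <= exp 1 ^ N) by (apply pow_incr; pose proof exp_1_bounds; lra).
  assert (H4 : pow2 (emin - MZ) / 2 = / pow2 (emax + MZ)).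
  { replace (emin - MZ)%Z with (- (emax + MZ) + 1)%Z by lia.
    rewrite pow2_succ, powerRZ_neg'. field. apply Rgt_not_eq, pow2_pos. }
  rewrite H4. pose proof (pow2_pos (emax + MZ)).
  assert (/ exp 1 ^ N <= / (2 * pow2 (emax + MZ))) by (apply Rinv_le_contravar; lra).
  assert (/ (2 * pow2 (emax + MZ)) < / pow2 (emax + MZ)) by (apply Rinv_lt_contravar; nra).
  lra.
Qed.

Lemma inF_m3 : inF (-3).
Proof.
  pose proof format_bounds. pose proof two_pow_MZ_succ.
  assert (Hm : (2 ^ MZ = 2 * 2 ^ (MZ - 1))%Z)
    by (replace MZ with ((MZ - 1) + 1)%Z at 1 by lia; rewrite Z.pow_add_r by lia; lia).
  assert (0 < 2 ^ (MZ - 1))%Z by (apply Z.pow_pos_nonneg; lia).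
  replace (-3) with (IZR (- (3 * 2 ^ (MZ - 1))) * pow2 (1 - MZ)).
  - apply inF_grid_point; lia.
  - rewrite opp_IZR, mult_IZR, pow2_IZR by lia.
    replace (1 - MZ)%Z with (- (MZ - 1))%Z by lia. rewrite powerRZ_neg'.
    field. apply Rgt_not_eq, pow2_pos.
Qed.

Lemma consecutive_m3 : consecutive (-3) (-3 + 2 * ulp1).
Proof.
  pose proof format_bounds. pose proof ulp1_bounds.
  pose proof (consecutive_add_ulp 1 (-3)) as Hc. simpl in Hc.
  replace (-3 + 2 * ulp1) with (-3 + 2 * 1 * ulp1) by ring.
  apply Hc; [lia|exact inF_m3|..]; rewrite Rabs_left; lra.
Qed.

Section SigmoidLike.

Variable f : R -> R.
Hypothesis f_pos : forall x, 0 < f x.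
Hypothesis f_le_compat : forall a b, a <= b -> f a <= f b.
Hypothesis f_lipschitz : forall a b, Rabs (f a - f b) <= Rabs (a - b).
Hypothesis f_le_exp : forall x, f x <= exp x.
Hypothesis f_le_add_exp_opp : forall y, 1 <= y -> f y <= y + exp (- y).
Hypothesis f_m3_bounds : 1/32 <= f (-3) <= 15/256.
Hypothesis f_increment_m3 : forall s, 0 <= s <= 1/4 -> s / 40 <= f (-3 + s) - f (-3).
Hypothesis f_0_bounds : 1/16 <= f 0 <= 1.
Hypothesis f_1_le : f 1 <= 2.

(* Beyond [Omega - 1] the excess [exp (- x)] is below the margin [pow2 emax * eps M >= 1/4]. *)
Lemma sigmoid_like_no_overflow x : inF x -> Rabs (f x) < overflow_bound.
Proof.
  intros Hx. pose proof (f_pos x). pose proof (inF_Rabs_le_Omega x Hx). pose proof pow2_emax_le_Omega.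
  pose proof format_bounds. pose proof (pow2_le_compat 4 emax ltac:(lia)) as Hemax. simpl in Hemax.
  destruct (Rle_dec x 1).
  - apply Rabs_lt_overflow_bound. pose proof (f_le_compat x 1 r). rewrite Rabs_right; lra.
  - pose proof (f_le_add_exp_opp x ltac:(lra)). pose proof overflow_margin_ge. unfold overflow_bound.
    rewrite Rabs_right in * by lra. destruct (Rle_dec x (Omega E M - 1)).
    + pose proof (exp_le_compat (- x) 0 ltac:(lra)) as Hx1. rewrite exp_0 in Hx1. lra.
    + pose proof (exp_le_inv_1_sub (- x) ltac:(lra)).
      assert (/ (1 - - x) <= / 16) by (apply Rinv_le_contravar; lra). lra.
Qed.

Lemma fl_sigmoid_like_lipschitz_left x : inF x -> x <= -3 ->
  Rabs (fl (f x) - fl (f (-3))) <= 4 * Rabs (x - -3).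
Proof.
  intros Hx Hx3. pose proof format_bounds. pose proof ulp1_bounds.
  pose proof (f_pos x). pose proof (f_le_compat x (-3) Hx3).
  apply (fl_lipschitz f x (-3) (2 * ulp1) (ulp1 / 64) 1); try lra.
  - intros Hne. pose proof (inF_dist_ge 1 x (-3) Hx inF_m3) as G. simpl in G.
    rewrite (Rabs_left x), (Rabs_left (-3)) in G by lra. specialize (G ltac:(lra) ltac:(lra) Hne). lra.
  - eapply Rle_trans; [apply (fl_error _ (-5)); [lia|]|simpl; lra].
    simpl. rewrite Rabs_right; lra.
  - eapply Rle_trans; [apply (fl_error _ (-5)); [lia|]|simpl; lra].
    simpl. rewrite Rabs_right; lra.
  - rewrite Rmult_1_l. apply f_lipschitz.
Qed.

(* For [y > 1] the nearest float to [f y] is at most as far as [y] itself, so [fl (f y) <= y + 2]. *)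
Lemma fl_sigmoid_like_lipschitz_right y : inF y -> -3 + 2 * ulp1 <= y ->
  Rabs (fl (f y) - fl (f (-3 + 2 * ulp1))) <= 4 * Rabs (y - (-3 + 2 * ulp1)).
Proof.
  intros Hy Hy3. pose proof format_bounds. pose proof ulp1_bounds.
  pose proof consecutive_m3 as (_ & Ieta' & _). pose proof (f_pos y). pose proof (f_pos (-3 + 2 * ulp1)).
  destruct (Rle_dec y 1).
  - pose proof (f_le_compat y 1 r). pose proof (f_le_compat (-3 + 2 * ulp1) 1 ltac:(lra)).
    apply (fl_lipschitz f y (-3 + 2 * ulp1) (2 * ulp1) (ulp1 / 2) 1); try lra.
    + intros Hne. destruct (Rle_dec y (-2)).
      * pose proof (inF_dist_ge 1 y (-3 + 2 * ulp1) Hy Ieta') as G. simpl in G.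
        rewrite (Rabs_left y), (Rabs_left (-3 + 2 * ulp1)) in G by lra.
        specialize (G ltac:(lra) ltac:(lra) Hne). lra.
      * rewrite Rabs_right; lra.
    + eapply Rle_trans; [apply (fl_error _ 0); [lia|]|simpl; lra].
      simpl. rewrite Rabs_right; lra.
    + eapply Rle_trans; [apply (fl_error _ 0); [lia|]|simpl; lra].
      simpl. rewrite Rabs_right; lra.
    + rewrite Rmult_1_l. apply f_lipschitz.
  - pose proof (fl_nearest (f y) y Hy) as Hn. pose proof (f_le_add_exp_opp y ltac:(lra)).
    pose proof (exp_le_compat (- y) 0 ltac:(lra)) as Hexp1. rewrite exp_0 in Hexp1.
    pose proof (Rle_abs (fl (f y) - f y)) as Ha. rewrite Rabs_minus_sym in Ha.
    assert (fl (f (-3 + 2 * ulp1)) <= fl (f y)) by (apply fl_le_compat, f_le_compat; lra).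
    assert (0 <= fl (f (-3 + 2 * ulp1))) by (apply (fl_ge _ 0); [exact inF_0|lra]).
    assert (fl (f y) <= y + 2).
    { destruct (Rle_dec y (f y)); [rewrite (Rabs_right (f y - y)) in Hn by lra|
        rewrite (Rabs_left (f y - y)) in Hn by lra]; lra. }
    rewrite !Rabs_right by lra. lra.
Qed.

Lemma Condition1_of_sigmoid_like : Condition1 E M (rndf E M f).
Proof.
  pose proof format_bounds. pose proof ulp1_bounds. pose proof (pow2_pos emax).
  pose proof consecutive_m3 as Hcons.
  assert (I16 : inF (1/16)) by (apply (inF_dyadic (-4)); [lia|simpl; field]).
  assert (I32 : inF (1/32)) by (apply (inF_dyadic (-5)); [lia|simpl; field]).
  assert (Ic1 : inF (- pow2 emax)) by (apply inF_opp, inF_pow2; lia).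
  assert (Hs0 : 1/32 <= fl (f (-3)) <= 1/16)
    by (split; [apply (fl_ge _ (1/32))|apply (fl_le _ (1/16))]; auto; lra).
  pose proof (f_le_compat (-3 + 2 * ulp1) 0 ltac:(lra)).
  apply (Condition1_intro f (-3) (-3 + 2 * ulp1) 4 sigmoid_like_no_overflow).
  - apply (C1_of_le_compat f (- pow2 emax) 0 sigmoid_like_no_overflow Ic1 inF_0); auto; try lra.
    + rewrite Rabs_Ropp, Rabs_R0, Rabs_right, Rmax_left by lra.
      apply pow2_le_compat. lia.
    + apply fl_underflow. pose proof (f_pos (- pow2 emax)). pose proof (f_le_exp (- pow2 emax)).
      pose proof exp_opp_pow2_emax_lt. lra.
    + assert (1/16 <= fl (f 0) <= 1)
        by (split; [apply (fl_ge _ (1/16))|apply (fl_le _ 1)]; auto using inF_1; lra).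
      lra.
  - exact Hcons.
  - rewrite Rabs_left; lra.
  - lra.
  - apply (fl_lt_compat _ _ (-5)); simpl; [lia|rewrite Rabs_right; lra|lra|].
    pose proof (f_increment_m3 (2 * ulp1) ltac:(lra)). lra.
  - apply Rle_trans with 1; [apply fl_le; [apply inF_1|lra]|lra].
  - intros x _ Hx. apply fl_le_compat, f_le_compat, Hx.
  - intros y _ Hy. apply fl_le_compat, f_le_compat, Hy.
  - lra.
  - exact fl_sigmoid_like_lipschitz_left.
  - exact fl_sigmoid_like_lipschitz_right.
Qed.

End SigmoidLike.

Lemma Condition1_ReLU : Condition1 E M (rndf E M ReLU).
Proof.
  apply Condition1_of_relu_like; intros x Hx; unfold ReLU;
    [apply Rmax_left|rewrite Rmax_right]; lra.
Qed.

Lemma Condition1_LeakyReLU a : 0 < a < 1 -> Condition1 E M (rndf E M (LeakyReLU a)).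
Proof.
  intros Ha. apply Condition1_of_relu_like; intros x Hx; unfold LeakyReLU;
    [apply Rmax_left|rewrite Rmax_right]; nra.
Qed.

Lemma Condition1_ELU : Condition1 E M (rndf E M ELU).
Proof.
  apply Condition1_of_relu_like; intros x Hx; unfold ELU; destruct (Rlt_dec 0 x); try lra.
  - replace x with 0 by lra. rewrite exp_0. ring.
  - pose proof (exp_ineq1_le x). pose proof (exp_le_compat x 0 Hx) as He. rewrite exp_0 in He. lra.
Qed.

Lemma Condition1_GELU : Condition1 E M (rndf E M GELU).
Proof.
  apply (Condition1_of_mul_gate Phi Phi_bounds Phi_le_compat); [|exact Phi_1_bounds].
  intros a b. pose proof (Phi_lipschitz a b). pose proof (Rabs_pos (a - b)). lra.
Qed.

Lemma Condition1_Mish : Condition1 E M (rndf E M Mish).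
Proof.
  exact (Condition1_of_mul_gate mish_gate mish_gate_bounds mish_gate_le_compat
    mish_gate_lipschitz mish_gate_1_bounds).
Qed.

Lemma Condition1_softplus : Condition1 E M (rndf E M softplus).
Proof.
  pose proof softplus_0_bounds.
  apply (Condition1_of_sigmoid_like softplus softplus_pos softplus_le_compat softplus_lipschitz
    softplus_le_exp); auto using softplus_le_add_exp_opp, softplus_m3_bounds, softplus_increment_m3,
    softplus_1_le; lra.
Qed.

Lemma Condition1_sigmoid : Condition1 E M (rndf E M sigmoid).
Proof.
  apply (Condition1_of_sigmoid_like sigmoid sigmoid_pos sigmoid_le_compat sigmoid_lipschitz
    sigmoid_le_exp); auto using sigmoid_m3_bounds, sigmoid_increment_m3.
  - intros y Hy. pose proof (sigmoid_lt_1 y). pose proof (exp_pos (- y)). lra.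
  - rewrite sigmoid_0. lra.
  - pose proof (sigmoid_lt_1 1). lra.
Qed.

End Format.

Theorem corollary1 (E M : nat) (hE : (5 <= E)%nat) (hM : (3 <= M)%nat)
  (hME : (M <= 2 ^ (E - 1))%nat) :
  Condition1 E M (rndf E M ReLU) /\
  (forall a : R, 0 < a < 1 -> Condition1 E M (rndf E M (LeakyReLU a))) /\
  Condition1 E M (rndf E M GELU) /\
  Condition1 E M (rndf E M ELU) /\
  Condition1 E M (rndf E M Mish) /\
  Condition1 E M (rndf E M softplus) /\
  Condition1 E M (rndf E M sigmoid) /\
  Condition1 E M (rndf E M tanh_act).
Proof.
  repeat match goal with |- _ /\ _ => split end.
  - exact (Condition1_ReLU E M hE hM hME).
  - exact (Condition1_LeakyReLU E M hE hM hME).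
  - exact (Condition1_GELU E M hE hM hME).
  - exact (Condition1_ELU E M hE hM hME).
  - exact (Condition1_Mish E M hE hM hME).
  - exact (Condition1_softplus E M hE hM hME).
  - exact (Condition1_sigmoid E M hE hM hME).
  - exact (Condition1_tanh E M hE hM hME).
Qed.
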